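(* Consider the one-dimensional Dirac equation described in the context with exact solution $\varPhi$ on $[0,T]\times[a,b]$, and suppose assumptions (A) and (B) hold. Then there exist constants $h_0>0$, $\tau_0>0$, independent of $\varepsilon$ and sufficiently small, such that for every $0<\varepsilon\le1$, $0<h\le h_0$, $0<\tau\le\tau_0$ satisfying the stability condition $0<\tau\le\frac{1}{V_{\max}+A_{1,\max}}$, the solution $\varPhi^n$ of the SIFD2 scheme described in the context satisfies $$\|\mathbf{e}^n\|_{l^2}\lesssim\frac{h^2}{\varepsilon}+\frac{\tau^2}{\varepsilon^3},\qquad 0\le n\le\frac T\tau,$$ where $\mathbf{e}^n_j=\varPhi(t_n,x_j)-\varPhi^n_j$, $\|\mathbf{e}^n\|_{l^2}^2=h\sum_{j=0}^{M-1}|\mathbf{e}^n_j|^2$, and $\lesssim$ hides a constant independent of $\varepsilon,\tau,h,n$.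
   Context: Pauli matrices: $\sigma_1=\begin{pmatrix}0&1\\1&0\end{pmatrix}$, $\sigma_3=\begin{pmatrix}1&0\\0&-1\end{pmatrix}$; $I_2$ the $2\times2$ identity. Let $\Omega=(a,b)$, $0<\varepsilon\le1$, $V,A_1$ real-valued. The equation is $$i\partial_t\varPhi=\Big(-\frac{i}{\varepsilon}\sigma_1\partial_x+\frac1\varepsilon\sigma_3\Big)\varPhi+\big(V(t,x)I_2-A_1(t,x)\sigma_1\big)\varPhi,\quad t>0,\ x\in\Omega,$$ for $\varPhi:[0,T]\times\bar\Omega\to\mathbb{C}^2$, with $\varPhi(t,a)=\varPhi(t,b)$, $\partial_x\varPhi(t,a)=\partial_x\varPhi(t,b)$, $\varPhi(0,x)=\varPhi_0(x)$, $\varPhi_0(a)=\varPhi_0(b)$, $\varPhi_0'(a)=\varPhi_0'(b)$; $0<T<T^*$ ($T^*$ the maximal existence time), $\Omega_T=[0,T]\times\Omega$. Assumption (A): $\varPhi\in C^3([0,T];(L^\infty)^2)\cap C^2([0,T];(W^{1,\infty}_p)^2)\cap C^1([0,T];(W^{2,\infty}_p)^2)\cap C([0,T];(W^{3,\infty}_p)^2)$ and $\|\partial_t^r\partial_x^s\varPhi\|_{L^\infty([0,T];(L^\infty(\Omega))^2)}\lesssim\varepsilon^{-r}$ for $0\le r\le3$, $0\le r+s\le3$, uniformly in $\varepsilon$; $W^{m,\infty}_p(\Omega)=\{u\in W^{m,\infty}(\Omega):\partial_x^lu(a)=\partial_x^lu(b),\ l<m\}$. Assumption (B): $V,A_1\in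 C(\bar\Omega_T)$; $V_{\max}=\max_{\bar\Omega_T}|V|$, $A_{1,\max}=\max_{\bar\Omega_T}|A_1|$. Discretization: $h=(b-a)/M$, $x_j=a+jh$, $t_n=n\tau$; periodic grid convention $\varPhi^n_M=\varPhi^n_0$, $\varPhi^n_{-1}=\varPhi^n_{M-1}$, $\varPhi^n_{M+1}=\varPhi^n_1$; $\delta_t\varPhi^n_j=(\varPhi^{n+1}_j-\varPhi^{n-1}_j)/(2\tau)$, $\delta_x\varPhi^n_j=(\varPhi^n_{j+1}-\varPhi^n_{j-1})/(2h)$, $V^n_j=V(t_n,x_j)$, $A^n_{1,j}=A_1(t_n,x_j)$. SIFD2 scheme: for $n\ge1$, $j=0,\dots,M-1$, $$i\delta_t\varPhi^n_j=\frac1\varepsilon(-i\sigma_1\delta_x+\sigma_3)\frac{\varPhi^{n+1}_j+\varPhi^{n-1}_j}{2}+\big(V^n_jI_2-A^n_{1,j}\sigma_1\big)\varPhi^n_j,$$ with periodic boundary values, $\varPhi^0_j=\varPhi_0(x_j)$, and first step $$\varPhi^1_j=\varPhi^0_j-\sin(\tau/\varepsilon)\sigma_1\varPhi_0'(x_j)-i\big(\sin(\tau/\varepsilon)\sigma_3+\tau V^0_jI_2-\tau A^0_{1,j}\sigma_1\big)\varPhi^0_j,\quad j=0,\dots,M.$$ *)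

From Stdlib Require Import Reals Lra Arith.
From Coquelicot Require Import Coquelicot.
Open Scope R_scope.

Definition V2 : Type := (C * C)%type.
Definition vadd (u v : V2) : V2 := (Cplus (fst u) (fst v), Cplus (snd u) (snd v)).
Definition vscal (c : C) (v : V2) : V2 := (Cmult c (fst v), Cmult c (snd v)).
Definition vrscal (r : R) (v : V2) : V2 := vscal (RtoC r) v.
Definition vsub (u v : V2) : V2 := vadd u (vrscal (-1) v).
Definition sigma1 (v : V2) : V2 := (snd v, fst v).
Definition sigma3 (v : V2) : V2 := (fst v, Copp (snd v)).
Definition vnorm (v : V2) : R := sqrt (Cmod (fst v) ^ 2 + Cmod (snd v) ^ 2).

Definition free_op (eps : R) (ux u : V2) : V2 :=
  vrscal (/ eps) (vadd (vscal (Copp Ci) (sigma1 ux)) (sigma3 u)).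
Definition pot_op (Vv Av : R) (u : V2) : V2 := vsub (vrscal Vv u) (vrscal Av (sigma1 u)).
Definition dirac_eq (eps Vv Av : R) (ut ux u : V2) : Prop :=
  vscal Ci ut = vadd (free_op eps ux u) (pot_op Vv Av u).

Definition supbnd (a b : R) (f : R -> V2) (c : R) : Prop :=
  forall x, a <= x <= b -> vnorm (f x) <= c.
Definition lipbnd (a b : R) (f : R -> V2) (c : R) : Prop :=
  forall x y, a <= x <= b -> a <= y <= b -> vnorm (vsub (f x) (f y)) <= c * Rabs (x - y).
(* g s plays the role of the s-th x-derivative of a function u in W^{m,oo}(a,b);
   Wbnd m a b g c : all the seminorms ||d_x^s u||_{L^oo}, s <= m, are <= c,
   where ||d_x^m u||_{L^oo} (m >= 1) equals the Lipschitz constant of d_x^(m-1) u. *)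
Definition Wbnd (m : nat) (a b : R) (g : nat -> R -> V2) (c : R) : Prop :=
  (forall s, (s <= m - 1)%nat -> supbnd a b (g s) c) /\
  ((1 <= m)%nat -> lipbnd a b (g (m - 1)%nat) c).
Definition xderiv (a b : R) (f f' : R -> V2) : Prop :=
  forall x, a <= x <= b -> forall e, 0 < e -> exists d, 0 < d /\
    forall y, a <= y <= b -> Rabs (y - x) < d ->
      vnorm (vsub (vsub (f y) (f x)) (vrscal (y - x) (f' x))) <= e * Rabs (y - x).

(** * Assumption (A) (qualitative part).
   D r s t x stands for d_t^r d_x^s Phi(t,x), r + s <= 3.
   Phi in C^k([0,T]; W^{3-k,oo}_p) for k = 0..3. *)
Definition regA (a b T : R) (D : nat -> nat -> R -> R -> V2) : Prop :=
  (* classical x-derivatives: d_t^r Phi(t) in W^{3-r,oo}, so it is C^{2-r} in x *)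
  (forall r s t, (r + s <= 1)%nat -> 0 <= t <= T ->
      xderiv a b (D r s t) (D r (S s) t)) /\
  (* periodicity of the space W^{3-r,oo}_p : d_x^l u(a) = d_x^l u(b), l < 3 - r *)
  (forall r s t, (r + s <= 2)%nat -> 0 <= t <= T -> D r s t a = D r s t b) /\
  (* differentiability in time, in the W^{3-k,oo} norm, of d_t^r Phi, r < k *)
  (forall k r, (k <= 3)%nat -> (r < k)%nat -> forall t, 0 <= t <= T ->
     forall e, 0 < e -> exists d, 0 < d /\ forall t', 0 <= t' <= T -> Rabs (t' - t) < d ->
       Wbnd (3 - k) a b
         (fun s x => vsub (vsub (D r s t' x) (D r s t x)) (vrscal (t' - t) (D (S r) s t x)))
         (e * Rabs (t' - t))) /\
  (* continuity in time, in the W^{3-k,oo} norm, of d_t^r Phi, r <= k *)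
  (forall k r, (k <= 3)%nat -> (r <= k)%nat -> forall t, 0 <= t <= T ->
     forall e, 0 < e -> exists d, 0 < d /\ forall t', 0 <= t' <= T -> Rabs (t' - t) < d ->
       Wbnd (3 - k) a b (fun s x => vsub (D r s t' x) (D r s t x)) e).

Definition cont_rect (T a b : R) (F : R -> R -> R) : Prop :=
  forall t x, 0 <= t <= T -> a <= x <= b -> forall e, 0 < e -> exists d, 0 < d /\
    forall t' x', 0 <= t' <= T -> a <= x' <= b -> Rabs (t' - t) < d -> Rabs (x' - x) < d ->
      Rabs (F t' x' - F t x) < e.
Definition is_absmax (T a b : R) (F : R -> R -> R) (m : R) : Prop :=
  (forall t x, 0 <= t <= T -> a <= x <= b -> Rabs (F t x) <= m) /\
  (exists t x, 0 <= t <= T /\ a <= x <= b /\ Rabs (F t x) = m).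

Definition meshh (a b : R) (M : nat) : R := (b - a) / INR M.
Definition gridx (a b : R) (M j : nat) : R := a + INR j * meshh a b M.

(* first step Phi^1_j, given Phi^0_j = u0, Phi_0'(x_j) = u0x *)
Definition first_step (eps tau Vv Av : R) (u0 u0x : V2) : V2 :=
  vsub (vsub u0 (vrscal (sin (tau / eps)) (sigma1 u0x)))
       (vscal Ci (vadd (vrscal (sin (tau / eps)) (sigma3 u0))
                       (vrscal tau (pot_op Vv Av u0)))).

(* SIFD2 equation at grid point j (0 <= j < M) with periodic indices;
   Um, U0, Up are the grid functions at times n-1, n, n+1 *)
Definition sifd2_eq (eps tau h : R) (M : nat) (Vn An : R)
    (Um U0 Up : nat -> V2) (j : nat) : Prop :=
  let avg k := vrscal (1 / 2) (vadd (Up k) (Um k)) in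
  vscal Ci (vrscal (/ (2 * tau)) (vsub (Up j) (Um j))) =
  vadd (free_op eps
          (vrscal (/ (2 * h)) (vsub (avg ((j + 1) mod M)%nat) (avg ((j + M - 1) mod M)%nat)))
          (avg j))
       (pot_op Vn An (U0 j)).

Fixpoint gsum (f : nat -> R) (M : nat) : R :=
  match M with O => 0 | S m => gsum f m + f m end.
Definition l2norm (h : R) (M : nat) (e : nat -> V2) : R :=
  sqrt (h * gsum (fun j => vnorm (e j) ^ 2) M).

(* The scheme is linear, so the error e^n = Phi(t_n) - Phi^n solves the scheme
   with source the local truncation error of the exact solution.  Taylor expansion bounds that
   source by O(h^2/eps + tau^2/eps^3), because each time derivative of Phi costs a factor 1/eps.
   Testing the error equation against i (e^(n+1) + e^(n-1)) / 2 cancels the Dirac operator: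
   sigma_3 contributes nothing and the periodic central difference is skew-symmetric.  What is
   left is an energy inequality for |e^(n+1)|^2 + |e^n|^2, which a discrete Gronwall lemma
   closes.  The first step is accurate to O(tau^2/eps^2), since sin(tau/eps) = tau/eps + O((tau/eps)^2). *)

From Stdlib Require Import Reals Lra Lia.
From Coquelicot Require Import Coquelicot.
Open Scope R_scope.

(** * Vectors of C^2 *)

(* The real part of the Hermitian product of C^2, i.e. the Euclidean product of R^4;
   [vnorm] is its norm. *)
Definition vdot (u v : V2) : R :=
  fst (fst u) * fst (fst v) + snd (fst u) * snd (fst v)
  + fst (snd u) * fst (snd v) + snd (snd u) * snd (snd v).

Definition vzero : V2 := (RtoC 0, RtoC 0).

Lemma V2_eq (a b c d a' b' c' d' : R) :
  a = a' -> b = b' -> c = c' -> d = d' -> (((a, b), (c, d)) : V2) = ((a', b'), (c', d')).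
Proof. intros; subst; reflexivity. Qed.

(* Identities between vector expressions are checked componentwise by [ring]; values of
   grid functions and of functions of t or x are first turned into atoms. *)
Ltac vabstract :=
  repeat match goal with
  | |- context [?f ?x] =>
      match type of f with
      | R -> V2 => generalize (f x); intro
      | nat -> V2 => generalize (f x); intro
      end
  end.

Ltac vexpand :=
  vabstract;
  repeat match goal with
  | v : V2 |- _ => destruct v as [[? ?] [? ?]]
  | z : C |- _ => destruct z
  end;
  cbv [vdot vzero first_step free_op pot_op vsub vrscal vscal vadd sigma1 sigma3
       Cplus Cmult Copp RtoC Ci fst snd] in *.
Ltac vring := vexpand; apply V2_eq; ring.
Ltac vfield := vexpand; apply V2_eq; field.

Lemma vadd_vzero (u : V2) : vadd u vzero = u.
Proof. vring. Qed.

Lemma vsub_vzero (u : V2) : vsub u vzero = u.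
Proof. vring. Qed.

Lemma vsub_eq0 (u v : V2) : vsub u v = vzero <-> u = v.
Proof.
  split; intros E.
  - vexpand; injection E; intros; apply V2_eq; lra.
  - subst; vring.
Qed.

Lemma vnorm_sq v : vnorm v ^ 2 = vdot v v.
Proof.
  unfold vnorm, Cmod; vexpand.
  rewrite pow2_sqrt, !pow2_sqrt; nra.
Qed.

Lemma vnorm_ge0 v : 0 <= vnorm v.
Proof. apply sqrt_pos. Qed.

Lemma le_of_sq_le x y : 0 <= y -> x ^ 2 <= y ^ 2 -> x <= y.
Proof. nra. Qed.

Lemma Rabs_vdot_le u v : Rabs (vdot u v) <= vnorm u * vnorm v.
Proof.
  apply le_of_sq_le; [apply Rmult_le_pos; apply vnorm_ge0|].
  rewrite pow2_abs, Rpow_mult_distr, !vnorm_sq.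
  destruct u as [[x1 x2] [x3 x4]], v as [[y1 y2] [y3 y4]]; unfold vdot; cbn [fst snd].
  (* Lagrange's identity *)
  match goal with |- ?l <= ?r => assert (r - l =
    (x1 * y2 - x2 * y1) ^ 2 + (x1 * y3 - x3 * y1) ^ 2 + (x1 * y4 - x4 * y1) ^ 2
    + (x2 * y3 - x3 * y2) ^ 2 + (x2 * y4 - x4 * y2) ^ 2 + (x3 * y4 - x4 * y3) ^ 2) by ring end.
  assert (0 <= (x1 * y2 - x2 * y1) ^ 2 + (x1 * y3 - x3 * y1) ^ 2 + (x1 * y4 - x4 * y1) ^ 2
    + (x2 * y3 - x3 * y2) ^ 2 + (x2 * y4 - x4 * y2) ^ 2 + (x3 * y4 - x4 * y3) ^ 2)
    by (repeat apply Rplus_le_le_0_compat; apply pow2_ge_0).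
  lra.
Qed.

Lemma vdot_self_ge0 v : 0 <= vdot v v.
Proof. rewrite <- vnorm_sq; apply pow2_ge_0. Qed.

Lemma vdot_le_sq u v : 2 * vdot u v <= vdot u u + vdot v v.
Proof.
  pose proof (vdot_self_ge0 (vsub u v)).
  replace (vdot (vsub u v) (vsub u v)) with (vdot u u + vdot v v - 2 * vdot u v) in * by (vexpand; ring).
  lra.
Qed.

Lemma vnorm_add_le u v : vnorm (vadd u v) <= vnorm u + vnorm v.
Proof.
  apply le_of_sq_le; [pose proof (vnorm_ge0 u); pose proof (vnorm_ge0 v); lra|].
  replace ((vnorm u + vnorm v) ^ 2) with (vnorm u ^ 2 + vnorm v ^ 2 + 2 * (vnorm u * vnorm v)) by ring.
  rewrite !vnorm_sq.
  pose proof (Rle_abs (vdot u v)); pose proof (Rabs_vdot_le u v).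
  replace (vdot (vadd u v) (vadd u v)) with (vdot u u + vdot v v + 2 * vdot u v) by (vexpand; ring).
  lra.
Qed.

Lemma vnorm_scal z v : vnorm (vscal z v) = Cmod z * vnorm v.
Proof.
  unfold vnorm, vscal; cbn [fst snd]; rewrite !Cmod_mult.
  rewrite <- (sqrt_pow2 (Cmod z)) at 3 by apply Cmod_ge_0.
  rewrite <- sqrt_mult_alt by apply pow2_ge_0.
  f_equal; ring.
Qed.

Lemma vnorm_rscal r v : vnorm (vrscal r v) = Rabs r * vnorm v.
Proof. unfold vrscal; rewrite vnorm_scal, Cmod_R; reflexivity. Qed.

Lemma vnorm_sub_le u v : vnorm (vsub u v) <= vnorm u + vnorm v.
Proof.
  unfold vsub; eapply Rle_trans; [apply vnorm_add_le|].
  rewrite vnorm_rscal, Rabs_left by lra; lra.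
Qed.

Lemma vnorm_eq_of_vdot u v : vdot u u = vdot v v -> vnorm u = vnorm v.
Proof.
  intros E; pose proof (vnorm_ge0 u); pose proof (vnorm_ge0 v).
  apply Rle_antisym; apply le_of_sq_le; rewrite ?vnorm_sq; lra.
Qed.

Lemma vnorm_sub_comm u v : vnorm (vsub u v) = vnorm (vsub v u).
Proof. apply vnorm_eq_of_vdot; vexpand; ring. Qed.

Lemma vnorm_sigma1 v : vnorm (sigma1 v) = vnorm v.
Proof. apply vnorm_eq_of_vdot; vexpand; ring. Qed.

Lemma vnorm_sigma3 v : vnorm (sigma3 v) = vnorm v.
Proof. apply vnorm_eq_of_vdot; vexpand; ring. Qed.

Lemma vnorm_pot_op_le Vv Av v : vnorm (pot_op Vv Av v) <= (Rabs Vv + Rabs Av) * vnorm v.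
Proof.
  unfold pot_op; eapply Rle_trans; [apply vnorm_sub_le|].
  rewrite !vnorm_rscal, vnorm_sigma1; lra.
Qed.

Lemma vnorm_free_op_le eps ux u : 0 < eps ->
  vnorm (free_op eps ux u) <= / eps * (vnorm ux + vnorm u).
Proof.
  intros He; unfold free_op.
  rewrite vnorm_rscal, Rabs_pos_eq by (left; apply Rinv_0_lt_compat, He).
  apply Rmult_le_compat_l; [left; apply Rinv_0_lt_compat, He|].
  eapply Rle_trans; [apply vnorm_add_le|].
  rewrite vnorm_scal, Cmod_opp, Cmod_Ci, vnorm_sigma1, vnorm_sigma3; lra.
Qed.

Lemma vnorm_vzero : vnorm vzero = 0.
Proof.
  unfold vnorm, vzero; cbn [fst snd]; rewrite Cmod_R, Rabs_R0.
  replace (0 ^ 2 + 0 ^ 2) with 0 by ring; apply sqrt_0.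
Qed.

Lemma vnorm_eq0 v : vnorm v = 0 -> v = vzero.
Proof.
  intros E; pose proof (vnorm_sq v) as Hsq; rewrite E in Hsq.
  vexpand; apply V2_eq; nra.
Qed.

(** * Mean value inequality and Taylor remainders *)

Definition rderiv (al be : R) (f f' : R -> R) : Prop :=
  forall x, al <= x <= be -> forall e, 0 < e -> exists d, 0 < d /\
    forall y, al <= y <= be -> Rabs (y - x) < d ->
      Rabs (f y - f x - (y - x) * f' x) <= e * Rabs (y - x).

Lemma rderiv_local_lipschitz al be f f' x : rderiv al be f f' -> al <= x <= be ->
  exists d, 0 < d /\ forall y, al <= y <= be -> Rabs (y - x) < d ->
    Rabs (f y - f x) <= (Rabs (f' x) + 1) * Rabs (y - x).
Proof.
  intros Hd Hx; destruct (Hd x Hx 1 Rlt_0_1) as [d [Hd0 H]].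
  exists d; split; [exact Hd0|]; intros y Hy Hyx; specialize (H y Hy Hyx).
  replace (f y - f x) with ((f y - f x - (y - x) * f' x) + (y - x) * f' x) by ring.
  eapply Rle_trans; [apply Rabs_triang|]; rewrite Rabs_mult; lra.
Qed.

Definition clamp (al be x : R) : R := Rmax al (Rmin be x).

Lemma clamp_in al be x : al <= be -> al <= clamp al be x <= be.
Proof. unfold clamp, Rmax, Rmin; repeat destruct Rle_dec; lra. Qed.

Lemma clamp_id al be x : al <= x <= be -> clamp al be x = x.
Proof. unfold clamp, Rmax, Rmin; repeat destruct Rle_dec; lra. Qed.

Lemma clamp_dist al be x y : al <= be -> al <= x <= be -> Rabs (clamp al be y - x) <= Rabs (y - x).
Proof. unfold clamp, Rmax, Rmin, Rabs; repeat destruct Rle_dec; repeat destruct Rcase_abs; lra. Qed.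

Lemma rderiv_clamp_is_derive al be f f' x : rderiv al be f f' -> al < x < be ->
  is_derive (fun y => f (clamp al be y)) x (f' x).
Proof.
  intros Hd Hx; apply is_derive_Reals; intros e He.
  destruct (Hd x ltac:(lra) (e / 2) ltac:(lra)) as [d [Hd0 Hd1]].
  assert (Hdel : 0 < Rmin d (Rmin (x - al) (be - x))) by (repeat apply Rmin_pos; lra).
  exists (mkposreal _ Hdel); intros k Hk0 Hk; cbn in Hk.
  apply Rmin_Rgt in Hk as [Hk1 Hk]; apply Rmin_Rgt in Hk as [Hk2 Hk3].
  assert (Hxk : al <= x + k <= be) by (unfold Rabs in *; destruct Rcase_abs; lra).
  specialize (Hd1 (x + k) Hxk ltac:(replace (x + k - x) with k by ring; lra)).
  replace (x + k - x) with k in Hd1 by ring.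
  rewrite !clamp_id by lra.
  replace ((f (x + k) - f x) / k - f' x) with ((f (x + k) - f x - k * f' x) / k) by (field; auto).
  unfold Rdiv; rewrite Rabs_mult, Rabs_inv.
  apply (Rmult_lt_reg_r (Rabs k)); [apply Rabs_pos_lt; auto|].
  rewrite Rmult_assoc, Rinv_l by (apply Rabs_no_R0; auto).
  pose proof (Rabs_pos_lt k Hk0); nra.
Qed.

Lemma rderiv_clamp_continuous al be f f' x : al <= be -> rderiv al be f f' -> al <= x <= be ->
  continuity_pt (fun y => f (clamp al be y)) x.
Proof.
  intros Hab Hd Hx.
  destruct (rderiv_local_lipschitz al be f f' x Hd Hx) as [d [Hd0 Hd1]].
  intros e He; pose proof (Rabs_pos (f' x)).
  exists (Rmin d (e / (Rabs (f' x) + 2))); split; [apply Rmin_pos; [lra|apply Rdiv_lt_0_compat; lra]|].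
  intros y [_ Hy]; cbn in *; unfold R_dist in *.
  apply Rmin_Rgt in Hy as [Hy1 Hy2].
  rewrite (clamp_id al be x Hx).
  pose proof (clamp_dist al be x y Hab Hx).
  specialize (Hd1 (clamp al be y) (clamp_in al be y Hab) ltac:(lra)).
  apply (Rmult_lt_compat_l (Rabs (f' x) + 2)) in Hy2; [|lra].
  replace ((Rabs (f' x) + 2) * (e / (Rabs (f' x) + 2))) with e in Hy2 by (field; lra).
  pose proof (Rabs_pos (clamp al be y - x)); nra.
Qed.

Lemma rderiv_mean_value al be f f' B : al <= be -> rderiv al be f f' ->
  (forall x, al <= x <= be -> Rabs (f' x) <= B) -> Rabs (f be - f al) <= B * (be - al).
Proof.
  intros Hab Hd Hb.
  destruct (Req_dec al be) as [<-|Hne]; [rewrite !Rminus_diag, Rabs_R0; lra|].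
  (* MVT_gen asks for two-sided continuity at al and be, so f is first extended by clamping *)
  destruct (MVT_gen (fun y => f (clamp al be y)) al be f') as [c [Hc Hmv]];
    rewrite ?Rmin_left, ?Rmax_right in * by lra.
  - intros x Hx; apply rderiv_clamp_is_derive; auto.
  - intros x Hx; apply (rderiv_clamp_continuous al be f f'); auto.
  - rewrite !clamp_id in Hmv by lra.
    rewrite Hmv, Rabs_mult, (Rabs_pos_eq (be - al)) by lra.
    apply Rmult_le_compat_r; [lra|apply Hb, Hc].
Qed.

Lemma xderiv_vdot al be F G w : xderiv al be F G ->
  rderiv al be (fun s => vdot (F s) w) (fun s => vdot (G s) w).
Proof.
  intros H x Hx e He; pose proof (vnorm_ge0 w).
  destruct (H x Hx (e / (vnorm w + 1))) as [d [Hd Hd']]; [apply Rdiv_lt_0_compat; lra|].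
  exists d; split; [exact Hd|]; intros y Hy Hyx; specialize (Hd' y Hy Hyx).
  replace (vdot (F y) w - vdot (F x) w - (y - x) * vdot (G x) w)
    with (vdot (vsub (vsub (F y) (F x)) (vrscal (y - x) (G x))) w) by (vexpand; ring).
  eapply Rle_trans; [apply Rabs_vdot_le|].
  eapply Rle_trans; [apply Rmult_le_compat_r; [apply vnorm_ge0|exact Hd']|].
  replace (e * Rabs (y - x)) with (e / (vnorm w + 1) * Rabs (y - x) * (vnorm w + 1)) by (field; lra).
  apply Rmult_le_compat_l; [|lra].
  apply Rmult_le_pos; [apply Rdiv_le_0_compat|apply Rabs_pos]; lra.
Qed.

Lemma xderiv_mean_value al be F G B : al <= be -> xderiv al be F G ->
  (forall s, al <= s <= be -> vnorm (G s) <= B) -> vnorm (vsub (F be) (F al)) <= B * (be - al).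
Proof.
  intros Hab Hd Hb; set (w := vsub (F be) (F al)).
  (* the real mean value inequality applied to the projection onto the increment w *)
  assert (Hmv : Rabs (vdot (F be) w - vdot (F al) w) <= B * vnorm w * (be - al)).
  { apply (rderiv_mean_value al be (fun s => vdot (F s) w) (fun s => vdot (G s) w)); [exact Hab| apply xderiv_vdot, Hd|].
    intros s Hs; eapply Rle_trans; [apply Rabs_vdot_le|].
    apply Rmult_le_compat_r; [apply vnorm_ge0|apply Hb, Hs]. }
  replace (vdot (F be) w - vdot (F al) w) with (vnorm w ^ 2) in Hmv
    by (rewrite vnorm_sq; unfold w; clear; vexpand; ring).
  rewrite Rabs_pos_eq in Hmv by apply pow2_ge_0.
  assert (0 <= B) by (eapply Rle_trans; [apply vnorm_ge0|apply (Hb al); lra]).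
  destruct (Rle_lt_or_eq_dec 0 (vnorm w) (vnorm_ge0 w)) as [Hw|<-]; [|nra].
  apply (Rmult_le_reg_r (vnorm w) _ _ Hw); nra.
Qed.

Lemma xderiv_restrict al be al' be' F G : xderiv al be F G -> al <= al' -> be' <= be ->
  xderiv al' be' F G.
Proof.
  intros H H1 H2 x Hx e He; destruct (H x ltac:(lra) e He) as [d [Hd Hd']].
  exists d; split; [exact Hd|]; intros; apply Hd'; auto; lra.
Qed.

Lemma xderiv_diff_le al be F G B x y : xderiv al be F G ->
  al <= x <= be -> al <= y <= be ->
  (forall s, Rmin x y <= s <= Rmax x y -> vnorm (G s) <= B) ->
  vnorm (vsub (F x) (F y)) <= B * Rabs (x - y).
Proof.
  intros Hd Hx Hy Hb; destruct (Rle_dec y x).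
  - rewrite Rmin_right, Rmax_left in Hb by lra; rewrite Rabs_pos_eq by lra.
    apply (xderiv_mean_value y x F G); [lra| |exact Hb].
    apply (xderiv_restrict al be); auto; lra.
  - rewrite Rmin_left, Rmax_right in Hb by lra; rewrite Rabs_left, vnorm_sub_comm by lra.
    replace (- (x - y)) with (y - x) by ring.
    apply (xderiv_mean_value x y F G); [lra| |exact Hb].
    apply (xderiv_restrict al be); auto; lra.
Qed.

Lemma between_in al be x y s : al <= x <= be -> al <= y <= be ->
  Rmin x y <= s <= Rmax x y -> al <= s <= be.
Proof. unfold Rmin, Rmax; repeat destruct Rle_dec; lra. Qed.

Lemma between_dist x c s : Rmin x c <= s <= Rmax x c -> Rabs (s - c) <= Rabs (x - c).
Proof. unfold Rmin, Rmax, Rabs; repeat destruct Rle_dec; repeat destruct Rcase_abs; lra. Qed.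

Lemma lipbnd_of_deriv_le al be F G B : xderiv al be F G ->
  (forall s, al <= s <= be -> vnorm (G s) <= B) -> lipbnd al be F B.
Proof.
  intros Hd Hb x y Hx Hy; apply (xderiv_diff_le al be F G); auto.
  intros s Hs; apply Hb, (between_in al be x y s Hx Hy Hs).
Qed.

Lemma xderiv_sub al be F G F' G' : xderiv al be F G -> xderiv al be F' G' ->
  xderiv al be (fun s => vsub (F s) (F' s)) (fun s => vsub (G s) (G' s)).
Proof.
  intros H H' x Hx e He.
  destruct (H x Hx (e / 2) ltac:(lra)) as [d [Hd Hd1]].
  destruct (H' x Hx (e / 2) ltac:(lra)) as [d' [Hd' Hd2]].
  exists (Rmin d d'); split; [apply Rmin_pos; auto|]; intros y Hy Hyx.
  apply Rmin_Rgt in Hyx as [Hyx1 Hyx2].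
  specialize (Hd1 y Hy Hyx1); specialize (Hd2 y Hy Hyx2).
  replace (vsub (vsub (vsub (F y) (F' y)) (vsub (F x) (F' x))) (vrscal (y - x) (vsub (G x) (G' x))))
    with (vsub (vsub (vsub (F y) (F x)) (vrscal (y - x) (G x)))
               (vsub (vsub (F' y) (F' x)) (vrscal (y - x) (G' x))))
    by vring.
  eapply Rle_trans; [apply vnorm_sub_le|lra].
Qed.

Lemma xderiv_affine al be c v : xderiv al be (fun s => vrscal (s - c) v) (fun _ => v).
Proof.
  intros x Hx e He; exists 1; split; [lra|]; intros y Hy Hyx.
  replace (vsub (vsub (vrscal (y - c) v) (vrscal (x - c) v)) (vrscal (y - x) v))
    with (vrscal 0 v) by vring.
  rewrite vnorm_rscal, Rabs_R0; pose proof (Rabs_pos (y - x)); nra.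
Qed.

Lemma xderiv_half_square al be c v :
  xderiv al be (fun s => vrscal ((s - c) ^ 2 / 2) v) (fun s => vrscal (s - c) v).
Proof.
  intros x Hx e He; pose proof (vnorm_ge0 v).
  exists (2 * e / (vnorm v + 1)); split; [apply Rdiv_lt_0_compat; lra|]; intros y Hy Hyx.
  replace (vsub (vsub (vrscal ((y - c) ^ 2 / 2) v) (vrscal ((x - c) ^ 2 / 2) v)) (vrscal (y - x) (vrscal (x - c) v)))
    with (vrscal ((y - x) ^ 2 / 2) v) by vfield.
  rewrite vnorm_rscal, Rabs_pos_eq by (apply Rdiv_le_0_compat; [apply pow2_ge_0|lra]).
  rewrite <- (pow2_abs (y - x)); pose proof (Rabs_pos (y - x)).
  apply (Rmult_lt_compat_r (vnorm v + 1)) in Hyx; [|lra].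
  replace (2 * e / (vnorm v + 1) * (vnorm v + 1)) with (2 * e) in Hyx by (field; lra).
  nra.
Qed.

Lemma taylor1_error al be F G L c x : 0 <= L -> xderiv al be F G -> lipbnd al be G L ->
  al <= c <= be -> al <= x <= be ->
  vnorm (vsub (vsub (F x) (F c)) (vrscal (x - c) (G c))) <= L * (x - c) ^ 2.
Proof.
  intros HL Hd Hl Hc Hx.
  pose proof (xderiv_sub _ _ _ _ _ _ Hd (xderiv_affine al be c (G c))) as Hd'.
  replace (vsub (vsub (F x) (F c)) (vrscal (x - c) (G c)))
    with (vsub (vsub (F x) (vrscal (x - c) (G c))) (vsub (F c) (vrscal (c - c) (G c)))) by vring.
  rewrite <- (pow2_abs (x - c)).
  replace (L * Rabs (x - c) ^ 2) with (L * Rabs (x - c) * Rabs (x - c)) by ring.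
  apply (xderiv_diff_le al be _ _ _ x c Hd' Hx Hc); intros s Hs.
  eapply Rle_trans; [apply (Hl s c (between_in al be x c s Hx Hc Hs) Hc)|].
  apply Rmult_le_compat_l; [exact HL|apply between_dist, Hs].
Qed.

Lemma taylor2_error al be F G G2 L c x : 0 <= L ->
  xderiv al be F G -> xderiv al be G G2 -> lipbnd al be G2 L ->
  al <= c <= be -> al <= x <= be ->
  vnorm (vsub (vsub (vsub (F x) (F c)) (vrscal (x - c) (G c))) (vrscal ((x - c) ^ 2 / 2) (G2 c)))
    <= L * Rabs (x - c) ^ 3.
Proof.
  intros HL Hd Hd2 Hl Hc Hx.
  pose proof (xderiv_sub _ _ _ _ _ _
    (xderiv_sub _ _ _ _ _ _ Hd (xderiv_affine al be c (G c))) (xderiv_half_square al be c (G2 c))) as Hd'.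
  replace (vsub (vsub (vsub (F x) (F c)) (vrscal (x - c) (G c))) (vrscal ((x - c) ^ 2 / 2) (G2 c)))
    with (vsub (vsub (vsub (F x) (vrscal (x - c) (G c))) (vrscal ((x - c) ^ 2 / 2) (G2 c)))
               (vsub (vsub (F c) (vrscal (c - c) (G c))) (vrscal ((c - c) ^ 2 / 2) (G2 c)))) by vfield.
  replace (L * Rabs (x - c) ^ 3) with (L * Rabs (x - c) ^ 2 * Rabs (x - c)) by ring.
  apply (xderiv_diff_le al be _ _ _ x c Hd' Hx Hc); intros s Hs.
  eapply Rle_trans; [apply (taylor1_error al be G G2 L c s HL Hd2 Hl Hc (between_in al be x c s Hx Hc Hs))|].
  rewrite <- (pow2_abs (s - c)); apply Rmult_le_compat_l; [exact HL|].
  pose proof (between_dist x c s Hs); pose proof (Rabs_pos (s - c)); apply pow_incr; lra.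
Qed.

Lemma central_difference_error al be F G G2 L c c' h : 0 <= L -> 0 < h ->
  xderiv al be F G -> xderiv al be G G2 -> lipbnd al be G2 L ->
  al <= c -> c + h <= be -> al <= c' - h -> c' <= be ->
  F c' = F c -> G c' = G c -> G2 c' = G2 c ->
  vnorm (vsub (vrscal (/ (2 * h)) (vsub (F (c + h)) (F (c' - h)))) (G c)) <= L * h ^ 2.
Proof.
  intros HL Hh Hd Hd2 Hl Hc1 Hc2 Hc1' Hc2' HF HG HG2.
  pose proof (taylor2_error al be F G G2 L c (c + h) HL Hd Hd2 Hl ltac:(lra) ltac:(lra)) as Hp.
  pose proof (taylor2_error al be F G G2 L c' (c' - h) HL Hd Hd2 Hl ltac:(lra) ltac:(lra)) as Hm.
  rewrite HF, HG, HG2 in Hm.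
  replace (c + h - c) with h in Hp by ring; replace (c' - h - c') with (- h) in Hm by ring.
  rewrite Rabs_pos_eq in Hp by lra; rewrite Rabs_Ropp, Rabs_pos_eq in Hm by lra.
  match type of Hp with vnorm ?rp <= _ => match type of Hm with vnorm ?rm <= _ =>
    replace (vsub (vrscal (/ (2 * h)) (vsub (F (c + h)) (F (c' - h)))) (G c))
      with (vrscal (/ (2 * h)) (vsub rp rm)) by (vfield; lra) end end.
  rewrite vnorm_rscal, Rabs_pos_eq by (left; apply Rinv_0_lt_compat; lra).
  eapply Rle_trans; [apply Rmult_le_compat_l; [left; apply Rinv_0_lt_compat; lra|apply vnorm_sub_le]|].
  apply Rle_trans with (/ (2 * h) * (L * h ^ 3 + L * h ^ 3)).
  - apply Rmult_le_compat_l; [left; apply Rinv_0_lt_compat|]; lra.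
  - right; field; lra.
Qed.

Lemma average_error al be F G L c h : 0 <= L -> 0 <= h ->
  xderiv al be F G -> lipbnd al be G L -> al <= c - h -> c + h <= be ->
  vnorm (vsub (vrscal (1 / 2) (vadd (F (c + h)) (F (c - h)))) (F c)) <= L * h ^ 2.
Proof.
  intros HL Hh Hd Hl Hc1 Hc2.
  pose proof (taylor1_error al be F G L c (c + h) HL Hd Hl ltac:(lra) ltac:(lra)) as Hp.
  pose proof (taylor1_error al be F G L c (c - h) HL Hd Hl ltac:(lra) ltac:(lra)) as Hm.
  replace (c + h - c) with h in Hp by ring; replace (c - h - c) with (- h) in Hm by ring.
  match type of Hp with vnorm ?rp <= _ => match type of Hm with vnorm ?rm <= _ =>
    replace (vsub (vrscal (1 / 2) (vadd (F (c + h)) (F (c - h)))) (F c))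
      with (vrscal (1 / 2) (vadd rp rm)) by vfield end end.
  rewrite vnorm_rscal, Rabs_pos_eq by lra.
  pose proof (vnorm_add_le
    (vsub (vsub (F (c + h)) (F c)) (vrscal h (G c))) (vsub (vsub (F (c - h)) (F c)) (vrscal (- h) (G c)))).
  replace ((- h) ^ 2) with (h ^ 2) in Hm by ring; lra.
Qed.

Lemma lipbnd_difference_le al be q C c c' h : 0 < h -> lipbnd al be q C ->
  al <= c -> c + h <= be -> al <= c' - h -> c' <= be -> q c' = q c ->
  vnorm (vrscal (/ (2 * h)) (vsub (q (c + h)) (q (c' - h)))) <= C.
Proof.
  intros Hh Hl Hc1 Hc2 Hc1' Hc2' Hq.
  pose proof (Hl (c + h) c ltac:(lra) ltac:(lra)) as Hp.
  pose proof (Hl c' (c' - h) ltac:(lra) ltac:(lra)) as Hm.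
  replace (c + h - c) with h in Hp by ring; replace (c' - (c' - h)) with h in Hm by ring.
  rewrite Rabs_pos_eq in Hp, Hm by lra; rewrite Hq in Hm.
  replace (vsub (q (c + h)) (q (c' - h))) with (vadd (vsub (q (c + h)) (q c)) (vsub (q c) (q (c' - h))))
    by vring.
  rewrite vnorm_rscal, Rabs_pos_eq by (left; apply Rinv_0_lt_compat; lra).
  eapply Rle_trans; [apply Rmult_le_compat_l; [left; apply Rinv_0_lt_compat; lra|apply vnorm_add_le]|].
  apply Rle_trans with (/ (2 * h) * (C * h + C * h)).
  - apply Rmult_le_compat_l; [left; apply Rinv_0_lt_compat|]; lra.
  - right; field; lra.
Qed.

(** * Periodic grids *)

Lemma gsum_ext f g M : (forall j, (j < M)%nat -> f j = g j) -> gsum f M = gsum g M.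
Proof. induction M; intros H; simpl; [reflexivity|]; rewrite IHM, H; auto. Qed.

Lemma gsum_le f g M : (forall j, (j < M)%nat -> f j <= g j) -> gsum f M <= gsum g M.
Proof. induction M; intros H; simpl; [lra|]; pose proof (H M ltac:(lia)); pose proof (IHM ltac:(auto)); lra. Qed.

Lemma gsum_add f g M : gsum (fun j => f j + g j) M = gsum f M + gsum g M.
Proof. induction M; simpl; [ring|]; rewrite IHM; ring. Qed.

Lemma gsum_scal c f M : gsum (fun j => c * f j) M = c * gsum f M.
Proof. induction M; simpl; [ring|]; rewrite IHM; ring. Qed.

Lemma gsum_sub f g M : gsum (fun j => f j - g j) M = gsum f M - gsum g M.
Proof. induction M; simpl; [ring|]; rewrite IHM; ring. Qed.

Lemma gsum_const c M : gsum (fun _ => c) M = INR M * c.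
Proof. induction M; simpl gsum; [simpl; ring|]; rewrite IHM, S_INR; ring. Qed.

Lemma gsum_ge0 f M : (forall j, (j < M)%nat -> 0 <= f j) -> 0 <= gsum f M.
Proof. intros H; rewrite <- (Rmult_0_r (INR M)), <- gsum_const; apply gsum_le, H. Qed.

Lemma gsum_shift1 f m : gsum f (S m) = gsum (fun j => f (S j)) m + f O.
Proof. induction m; simpl in *; [ring|]; rewrite IHm; ring. Qed.

Lemma mod_succ j M : (j < M)%nat -> ((j + 1) mod M = if Nat.eq_dec (j + 1) M then 0 else j + 1)%nat.
Proof.
  intros; destruct Nat.eq_dec as [->|]; [apply Nat.Div0.mod_same|apply Nat.mod_small; lia].
Qed.

Lemma mod_pred j M : (j < M)%nat -> ((j + M - 1) mod M = if Nat.eq_dec j 0 then M - 1 else j - 1)%nat.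
Proof.
  intros; destruct Nat.eq_dec as [->|]; [apply Nat.mod_small; lia|].
  symmetry; apply (Nat.mod_unique _ _ 1); lia.
Qed.

Lemma mod_pred_succ j M : (j < M)%nat -> (((j + 1) mod M + M - 1) mod M = j)%nat.
Proof.
  intros; rewrite mod_succ by auto.
  destruct Nat.eq_dec; rewrite mod_pred by lia; destruct Nat.eq_dec; lia.
Qed.

Lemma gsum_rotate f M : (1 <= M)%nat -> gsum (fun j => f ((j + 1) mod M)%nat) M = gsum f M.
Proof.
  intros HM; destruct M as [|m]; [lia|].
  rewrite (gsum_shift1 f); cbn [gsum]; f_equal.
  - apply gsum_ext; intros; rewrite Nat.mod_small by lia; f_equal; lia.
  - rewrite Nat.add_1_r; f_equal; apply Nat.Div0.mod_same.
Qed.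

Definition tdiff (tau : R) (Um Up : nat -> V2) (j : nat) : V2 :=
  vrscal (/ (2 * tau)) (vsub (Up j) (Um j)).

Definition tavg (Um Up : nat -> V2) (j : nat) : V2 := vrscal (1 / 2) (vadd (Up j) (Um j)).

Definition xdiff (h : R) (M : nat) (W : nat -> V2) (j : nat) : V2 :=
  vrscal (/ (2 * h)) (vsub (W ((j + 1) mod M)%nat) (W ((j + M - 1) mod M)%nat)).

Section Grid.

Variables (a b : R) (M : nat).
Hypothesis Hab : a < b.
Hypothesis HM : (1 <= M)%nat.

Lemma meshh_pos : 0 < meshh a b M.
Proof. apply Rdiv_lt_0_compat; [lra|apply lt_0_INR; lia]. Qed.

Lemma INR_mul_meshh : INR M * meshh a b M = b - a.
Proof. unfold meshh; field; apply not_0_INR; lia. Qed.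

Lemma gridx_range j : (j < M)%nat -> a <= gridx a b M j /\ gridx a b M j + meshh a b M <= b.
Proof.
  intros Hj; unfold gridx; pose proof meshh_pos; pose proof INR_mul_meshh; pose proof (pos_INR j).
  assert (INR j + 1 <= INR M) by (rewrite <- S_INR; apply le_INR; lia); split; nra.
Qed.

Lemma gridx_in j : (j < M)%nat -> a <= gridx a b M j <= b.
Proof. intros Hj; pose proof (gridx_range j Hj); pose proof meshh_pos; lra. Qed.

Lemma gridx_next (f : R -> V2) j : (j < M)%nat -> f a = f b ->
  f (gridx a b M ((j + 1) mod M)) = f (gridx a b M j + meshh a b M).
Proof.
  intros Hj Hf; rewrite mod_succ by exact Hj; destruct Nat.eq_dec as [E|E].
  - unfold gridx; rewrite Rmult_0_l, Rplus_0_r, Hf; f_equal.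
    pose proof INR_mul_meshh; rewrite <- E, plus_INR in *; simpl in *; lra.
  - f_equal; unfold gridx; rewrite plus_INR; simpl; ring.
Qed.

(* For [j = 0] the backward neighbour [b - h] is seen from [b], the periodic copy of [x_0 = a]. *)
Lemma gridx_prev j : (j < M)%nat -> exists c,
  a <= c - meshh a b M /\ c <= b /\ gridx a b M ((j + M - 1) mod M) = c - meshh a b M /\
  (c = gridx a b M j \/ gridx a b M j = a /\ c = b).
Proof.
  intros Hj; rewrite mod_pred by exact Hj; pose proof INR_mul_meshh.
  destruct Nat.eq_dec as [->|E].
  - exists b; unfold gridx; rewrite minus_INR by lia; simpl.
    pose proof meshh_pos; pose proof (gridx_range O ltac:(lia)); unfold gridx in *; simpl in *.
    repeat split; try lra; right; split; lra.
  - exists (gridx a b M j); pose proof (gridx_range (j - 1) ltac:(lia)); pose proof (gridx_range j Hj).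
    unfold gridx in *; rewrite minus_INR in * by lia; simpl in *.
    repeat split; try lra; left; reflexivity.
Qed.

Lemma grid_central_difference_error F G G2 L j : (j < M)%nat -> 0 <= L ->
  xderiv a b F G -> xderiv a b G G2 -> lipbnd a b G2 L -> F a = F b -> G a = G b -> G2 a = G2 b ->
  vnorm (vsub (xdiff (meshh a b M) M (fun k => F (gridx a b M k)) j) (G (gridx a b M j)))
    <= L * meshh a b M ^ 2.
Proof.
  intros Hj HL Hd Hd2 Hl HF HG HG2; unfold xdiff.
  rewrite (gridx_next F j Hj HF).
  destruct (gridx_prev j Hj) as [c [Hc1 [Hc2 [-> Hc]]]]; pose proof (gridx_range j Hj).
  apply (central_difference_error a b F G G2); auto; try lra; try apply meshh_pos;
    destruct Hc as [->|[-> ->]]; auto.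
Qed.

Lemma grid_lipbnd_difference_le q C j : (j < M)%nat -> lipbnd a b q C -> q a = q b ->
  vnorm (xdiff (meshh a b M) M (fun k => q (gridx a b M k)) j) <= C.
Proof.
  intros Hj Hl Hq; unfold xdiff.
  rewrite (gridx_next q j Hj Hq).
  destruct (gridx_prev j Hj) as [c [Hc1 [Hc2 [-> Hc]]]]; pose proof (gridx_range j Hj).
  apply (lipbnd_difference_le a b); auto; try lra; try apply meshh_pos;
    destruct Hc as [->|[-> ->]]; auto.
Qed.

End Grid.

(** * The SIFD2 scheme *)

Definition dirac_residual (eps Vv Av : R) (ut ux u : V2) : V2 :=
  vsub (vscal Ci ut) (vadd (free_op eps ux u) (pot_op Vv Av u)).

Lemma dirac_eq_iff_residual eps Vv Av ut ux u :
  dirac_eq eps Vv Av ut ux u <-> dirac_residual eps Vv Av ut ux u = vzero.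
Proof. unfold dirac_residual; rewrite vsub_eq0; reflexivity. Qed.

Lemma dirac_residual_sub_le eps Vv Av ut ux u Vv' Av' ut' ux' u' : 0 < eps ->
  vnorm (vsub (dirac_residual eps Vv' Av' ut' ux' u') (dirac_residual eps Vv Av ut ux u))
    <= vnorm (vsub ut' ut) + / eps * (vnorm (vsub ux' ux) + vnorm (vsub u' u))
       + (Rabs (Vv' - Vv) + Rabs (Av' - Av)) * vnorm u' + (Rabs Vv + Rabs Av) * vnorm (vsub u' u).
Proof.
  intros He.
  replace (vsub (dirac_residual eps Vv' Av' ut' ux' u') (dirac_residual eps Vv Av ut ux u))
    with (vsub (vsub (vscal Ci (vsub ut' ut)) (free_op eps (vsub ux' ux) (vsub u' u)))
               (vadd (pot_op (Vv' - Vv) (Av' - Av) u') (pot_op Vv Av (vsub u' u))))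
    by (unfold dirac_residual; vring).
  eapply Rle_trans; [apply vnorm_sub_le|].
  eapply Rle_trans; [apply Rplus_le_compat; [apply vnorm_sub_le|apply vnorm_add_le]|].
  rewrite vnorm_scal, Cmod_Ci.
  pose proof (vnorm_free_op_le eps (vsub ux' ux) (vsub u' u) He).
  pose proof (vnorm_pot_op_le (Vv' - Vv) (Av' - Av) u'); pose proof (vnorm_pot_op_le Vv Av (vsub u' u)).
  lra.
Qed.

Lemma dirac_residual_eq0_of_approx eps Vv Av ut ux u B : 0 < eps ->
  (forall eta, 0 < eta -> exists Vv' Av' ut' ux' u',
     dirac_residual eps Vv' Av' ut' ux' u' = vzero /\ vnorm u' <= B /\
     Rabs (Vv' - Vv) <= eta /\ Rabs (Av' - Av) <= eta /\
     vnorm (vsub ut' ut) <= eta /\ vnorm (vsub ux' ux) <= eta /\ vnorm (vsub u' u) <= eta) ->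
  dirac_residual eps Vv Av ut ux u = vzero.
Proof.
  intros He H; apply vnorm_eq0, Rle_antisym; [|apply vnorm_ge0].
  set (C := 1 + 2 / eps + 2 * Rabs B + Rabs Vv + Rabs Av).
  assert (HC : 0 < C) by (unfold C; pose proof (Rabs_pos B); pose proof (Rabs_pos Vv);
    pose proof (Rabs_pos Av); pose proof (Rdiv_lt_0_compat 2 eps ltac:(lra) He); lra).
  apply Rle_plus_epsilon; intros e He'; rewrite Rplus_0_l.
  destruct (H (e / C) ltac:(apply Rdiv_lt_0_compat; lra))
    as [Vv' [Av' [ut' [ux' [u' [H0 [Hu [HV [HA [Ht [Hx Hu']]]]]]]]]]].
  pose proof (dirac_residual_sub_le eps Vv Av ut ux u Vv' Av' ut' ux' u' He) as Hs.
  rewrite H0, vnorm_sub_comm, vsub_vzero in Hs.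
  set (eta := e / C) in *; replace e with (C * eta) by (unfold eta; field; lra).
  assert (0 < eta) by (unfold eta; apply Rdiv_lt_0_compat; lra).
  assert (/ eps * (vnorm (vsub ux' ux) + vnorm (vsub u' u)) <= 2 / eps * eta)
    by (unfold Rdiv; rewrite (Rmult_comm 2), Rmult_assoc; apply Rmult_le_compat_l;
        [left; apply Rinv_0_lt_compat|]; lra).
  assert ((Rabs (Vv' - Vv) + Rabs (Av' - Av)) * vnorm u' <= 2 * eta * Rabs B)
    by (apply Rmult_le_compat; [pose proof (Rabs_pos (Vv' - Vv)); pose proof (Rabs_pos (Av' - Av)); lra
       |apply vnorm_ge0|lra|eapply Rle_trans; [exact Hu|apply Rle_abs]]).
  assert ((Rabs Vv + Rabs Av) * vnorm (vsub u' u) <= (Rabs Vv + Rabs Av) * eta)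
    by (apply Rmult_le_compat_l; [pose proof (Rabs_pos Vv); pose proof (Rabs_pos Av)|]; lra).
  unfold C; lra.
Qed.

Lemma xdiff_sub h M W W' j :
  xdiff h M (fun k => vsub (W k) (W' k)) j = vsub (xdiff h M W j) (xdiff h M W' j).
Proof. unfold xdiff; vring. Qed.

Definition sifd2_defect (eps tau h : R) (M : nat) (Vn An : R) (Um U0 Up : nat -> V2) (j : nat) : V2 :=
  vsub (vscal Ci (tdiff tau Um Up j))
       (vadd (free_op eps (xdiff h M (tavg Um Up) j) (tavg Um Up j)) (pot_op Vn An (U0 j))).

Lemma sifd2_eq_iff_defect eps tau h M Vn An Um U0 Up j :
  sifd2_eq eps tau h M Vn An Um U0 Up j <-> sifd2_defect eps tau h M Vn An Um U0 Up j = vzero.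
Proof. unfold sifd2_defect; rewrite vsub_eq0; reflexivity. Qed.

Lemma sifd2_defect_sub eps tau h M Vn An Pm P0 Pp Um U0 Up j :
  sifd2_defect eps tau h M Vn An
    (fun k => vsub (Pm k) (Um k)) (fun k => vsub (P0 k) (U0 k)) (fun k => vsub (Pp k) (Up k)) j
  = vsub (sifd2_defect eps tau h M Vn An Pm P0 Pp j) (sifd2_defect eps tau h M Vn An Um U0 Up j).
Proof.
  unfold sifd2_defect.
  replace (tdiff tau (fun k => vsub (Pm k) (Um k)) (fun k => vsub (Pp k) (Up k)) j)
    with (vsub (tdiff tau Pm Pp j) (tdiff tau Um Up j)) by (unfold tdiff; vring).
  replace (xdiff h M (tavg (fun k => vsub (Pm k) (Um k)) (fun k => vsub (Pp k) (Up k))) j)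
    with (vsub (xdiff h M (tavg Pm Pp) j) (xdiff h M (tavg Um Up) j)) by (unfold xdiff, tavg; vring).
  replace (tavg (fun k => vsub (Pm k) (Um k)) (fun k => vsub (Pp k) (Up k)) j)
    with (vsub (tavg Pm Pp j) (tavg Um Up j)) by (unfold tavg; vring).
  vring.
Qed.

Lemma sifd2_defect_le eps tau h M Vn An Pm P0 Pp ut ux j B1 B2 B3 B4 : 0 < eps ->
  dirac_eq eps Vn An ut ux (P0 j) ->
  vnorm (vsub (tdiff tau Pm Pp j) ut) <= B1 ->
  vnorm (vsub (xdiff h M P0 j) ux) <= B2 ->
  vnorm (xdiff h M (fun k => vsub (tavg Pm Pp k) (P0 k)) j) <= B3 ->
  vnorm (vsub (tavg Pm Pp j) (P0 j)) <= B4 ->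
  vnorm (sifd2_defect eps tau h M Vn An Pm P0 Pp j) <= B1 + / eps * (B2 + B3 + B4).
Proof.
  intros He Hpde H1 H2 H3 H4; rewrite xdiff_sub in H3.
  replace (sifd2_defect eps tau h M Vn An Pm P0 Pp j)
    with (vadd (vsub (vscal Ci (vsub (tdiff tau Pm Pp j) ut))
                     (free_op eps (vadd (vsub (xdiff h M P0 j) ux)
                                        (vsub (xdiff h M (tavg Pm Pp) j) (xdiff h M P0 j)))
                                  (vsub (tavg Pm Pp j) (P0 j))))
               (dirac_residual eps Vn An ut ux (P0 j)))
    by (unfold sifd2_defect, dirac_residual; vring).
  apply dirac_eq_iff_residual in Hpde; rewrite Hpde, vadd_vzero.
  eapply Rle_trans; [apply vnorm_sub_le|]; rewrite vnorm_scal, Cmod_Ci, Rmult_1_l.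
  eapply Rle_trans; [apply Rplus_le_compat_l, vnorm_free_op_le, He|].
  pose proof (vnorm_add_le (vsub (xdiff h M P0 j) ux) (vsub (xdiff h M (tavg Pm Pp) j) (xdiff h M P0 j))).
  assert (0 < / eps) by (apply Rinv_0_lt_compat, He).
  apply Rplus_le_compat; [exact H1|]; apply Rmult_le_compat_l; lra.
Qed.

Definition sqsum (M : nat) (f : nat -> V2) : R := gsum (fun j => vnorm (f j) ^ 2) M.

Lemma l2norm_ext h M e e' : (forall j, (j < M)%nat -> e j = e' j) -> l2norm h M e = l2norm h M e'.
Proof.
  intros H; unfold l2norm; do 2 f_equal; apply gsum_ext; intros j Hj; rewrite H by exact Hj; reflexivity.
Qed.

Lemma sqsum_ge0 M f : 0 <= sqsum M f.
Proof. apply gsum_ge0; intros; apply pow2_ge_0. Qed.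

Lemma sqsum_le M f B : 0 <= B -> (forall j, (j < M)%nat -> vnorm (f j) <= B) ->
  sqsum M f <= INR M * B ^ 2.
Proof.
  intros HB H; unfold sqsum; rewrite <- gsum_const; apply gsum_le; intros j Hj.
  pose proof (H j Hj); pose proof (vnorm_ge0 (f j)); apply pow_incr; lra.
Qed.

Lemma sifd2_energy_identity eps tau h M Vn An em e0 ep xi j : eps <> 0 -> tau <> 0 ->
  sifd2_defect eps tau h M Vn An em e0 ep j = xi ->
  vnorm (ep j) ^ 2 - vnorm (em j) ^ 2 =
  4 * tau * (- / eps * vdot (sigma1 (xdiff h M (tavg em ep) j)) (tavg em ep j)
             + vdot (vadd (pot_op Vn An (e0 j)) xi) (vscal Ci (tavg em ep j))).
Proof.
  intros He Ht Hd; rewrite !vnorm_sq.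
  apply (f_equal (fun z => vdot z (vscal Ci (tavg em ep j)))) in Hd.
  unfold sifd2_defect in Hd; cbv beta in Hd.
  set (dx := xdiff h M (tavg em ep) j) in *; clearbody dx.
  unfold tdiff, tavg in *.
  match type of Hd with ?L = ?R => match goal with |- ?L' = ?R' =>
    assert (E : L' - R' = 4 * tau * (L - R)) by (vexpand; field; auto) end end.
  rewrite Hd, Rminus_diag, Rmult_0_r in E; lra.
Qed.

Lemma xdiff_skew h M w : (1 <= M)%nat ->
  gsum (fun j => vdot (sigma1 (xdiff h M w j)) (w j)) M = 0.
Proof.
  intros HM.
  assert (Hs : gsum (fun j => vdot (sigma1 (w ((j + 1) mod M)%nat)) (w j)) M
             = gsum (fun j => vdot (sigma1 (w ((j + M - 1) mod M)%nat)) (w j)) M).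
  { rewrite <- (gsum_rotate (fun j => vdot (sigma1 (w ((j + M - 1) mod M)%nat)) (w j)) M HM).
    apply gsum_ext; intros j Hj; rewrite mod_pred_succ by exact Hj; vexpand; ring. }
  rewrite (gsum_ext _ (fun j => / (2 * h) * (vdot (sigma1 (w ((j + 1) mod M)%nat)) (w j)
                                         - vdot (sigma1 (w ((j + M - 1) mod M)%nat)) (w j))))
    by (intros; unfold xdiff; vexpand; ring).
  rewrite gsum_scal, gsum_sub, Hs; ring.
Qed.

Lemma vdot_pot_op_Ci_le Vv Av m e xi p q : Rabs Vv + Rabs Av <= m ->
  vdot (vadd (pot_op Vv Av e) xi) (vscal Ci (vrscal (1 / 2) (vadd p q)))
    <= m ^ 2 * vnorm e ^ 2 + vnorm xi ^ 2 + (vnorm p ^ 2 + vnorm q ^ 2) / 4.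
Proof.
  intros Hm; set (y := vadd (pot_op Vv Av e) xi).
  pose proof (vdot_le_sq y (vscal Ci (vrscal (1 / 2) (vadd p q)))) as H1.
  pose proof (vdot_le_sq p q) as H2.
  replace (vdot (vscal Ci (vrscal (1 / 2) (vadd p q))) (vscal Ci (vrscal (1 / 2) (vadd p q))))
    with ((vdot p p + vdot q q + 2 * vdot p q) / 4) in H1 by (vexpand; field).
  assert (Hy : vnorm y <= m * vnorm e + vnorm xi).
  { unfold y; eapply Rle_trans; [apply vnorm_add_le|].
    pose proof (vnorm_pot_op_le Vv Av e); pose proof (vnorm_ge0 e); nra. }
  assert (Hy2 : vnorm y ^ 2 <= 2 * (m * vnorm e) ^ 2 + 2 * vnorm xi ^ 2).
  { pose proof (vnorm_ge0 y); pose proof (pow2_ge_0 (m * vnorm e - vnorm xi));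
    apply Rle_trans with ((m * vnorm e + vnorm xi) ^ 2); [apply pow_incr; lra|nra]. }
  rewrite !vnorm_sq in *; rewrite Rpow_mult_distr, vnorm_sq in Hy2; lra.
Qed.

Lemma sifd2_energy_step eps tau h M m (Vn An : nat -> R) (em e0 ep xi : nat -> V2) :
  (1 <= M)%nat -> 0 < tau -> 0 < eps ->
  (forall j, (j < M)%nat -> Rabs (Vn j) + Rabs (An j) <= m) ->
  (forall j, (j < M)%nat -> sifd2_defect eps tau h M (Vn j) (An j) em e0 ep j = xi j) ->
  sqsum M ep - sqsum M em
    <= tau * (4 * m ^ 2 * sqsum M e0 + sqsum M ep + sqsum M em) + 4 * tau * sqsum M xi.
Proof.
  intros HM Ht He Hm Hd.
  set (I j := vdot (vadd (pot_op (Vn j) (An j) (e0 j)) (xi j)) (vscal Ci (tavg em ep j))).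
  assert (E : sqsum M ep - sqsum M em = 4 * tau * gsum I M).
  { unfold sqsum; rewrite <- gsum_sub.
    rewrite (gsum_ext _ (fun j => 4 * tau * (- / eps * vdot (sigma1 (xdiff h M (tavg em ep) j)) (tavg em ep j))
                                  + 4 * tau * I j)).
    - rewrite gsum_add, !gsum_scal, xdiff_skew by exact HM; ring.
    - intros j Hj; rewrite (sifd2_energy_identity eps tau h M (Vn j) (An j) em e0 ep (xi j) j)
        by (auto; lra); unfold I; ring. }
  assert (HI : gsum I M <= m ^ 2 * sqsum M e0 + sqsum M xi + (sqsum M ep + sqsum M em) / 4).
  { unfold sqsum; rewrite <- gsum_scal, <- gsum_add.
    replace ((gsum (fun j => vnorm (ep j) ^ 2) M + gsum (fun j => vnorm (em j) ^ 2) M) / 4)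
      with (gsum (fun j => / 4 * (vnorm (ep j) ^ 2 + vnorm (em j) ^ 2)) M)
      by (rewrite gsum_scal, gsum_add; field).
    rewrite <- gsum_add; apply gsum_le; intros j Hj.
    pose proof (vdot_pot_op_Ci_le (Vn j) (An j) m (e0 j) (xi j) (ep j) (em j) (Hm j Hj)).
    unfold I, tavg; lra. }
  rewrite E; nra.
Qed.

Lemma Rabs_sin_sub_le x : 0 <= x -> Rabs (sin x - x) <= 2 * x ^ 2.
Proof.
  intros Hx; destruct (Rle_lt_dec x 1).
  - destruct (sin_bound x 0 Hx ltac:(pose proof PI2_1; lra)) as [Hlb _].
    assert (Hub : sin x <= x) by (destruct (Req_dec x 0) as [->|]; [rewrite sin_0; lra|left; apply sin_lt_x; lra]).
    unfold sin_approx, sin_term in Hlb; simpl in Hlb.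
    rewrite Rabs_left1 by lra; nra.
  - pose proof (SIN_bound x); unfold Rabs; destruct Rcase_abs; nra.
Qed.

Lemma first_step_split eps tau Vv Av u0 u0x ut u1 :
  vsub u1 (first_step eps tau Vv Av u0 u0x) =
  vadd (vadd (vsub (vsub u1 u0) (vrscal tau ut))
             (vrscal (sin (tau / eps) - tau / eps) (vadd (sigma1 u0x) (vscal Ci (sigma3 u0)))))
       (vscal (0, - tau) (dirac_residual eps Vv Av ut u0x u0)).
Proof. unfold dirac_residual; vexpand; apply V2_eq; unfold Rdiv; ring. Qed.

Lemma energy_recursion_step En Ep tau kap G : 0 <= tau * kap <= 1 / 2 -> 0 <= Ep -> 0 <= tau * G ->
  En - Ep <= tau * kap * (En + Ep) + tau * G -> En <= (1 + 4 * (tau * kap)) * Ep + 2 * (tau * G).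
Proof.
  intros Hx HEp HG H; set (x := tau * kap) in *.
  apply (Rmult_le_reg_r (1 - x)); [lra|].
  assert ((1 + x) * Ep <= (1 + 4 * x) * (1 - x) * Ep) by (apply Rmult_le_compat_r; nra).
  nra.
Qed.

Lemma discrete_gronwall (E : nat -> R) tau kap G N :
  0 < tau -> 0 <= kap -> tau * kap <= 1 / 2 -> 0 <= G -> (forall n, 0 <= E n) ->
  (forall n, (1 <= n <= N)%nat -> E n - E (n - 1)%nat <= tau * kap * (E n + E (n - 1)%nat) + tau * G) ->
  forall n, (n <= N)%nat -> E n <= exp (4 * kap * (INR n * tau)) * (E O + 2 * INR n * tau * G).
Proof.
  intros Ht Hk Hx HG HE Hs n; induction n as [|n IH]; intros Hn.
  - simpl; rewrite Rmult_0_l, Rmult_0_r, exp_0; lra.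
  - pose proof (Hs (S n) ltac:(lia)) as Hsn; replace (S n - 1)%nat with n in Hsn by lia.
    apply energy_recursion_step in Hsn; [|nra|apply HE|nra].
    specialize (IH ltac:(lia)); pose proof (pos_INR n) as Hn0.
    rewrite S_INR; replace (4 * kap * ((INR n + 1) * tau)) with (4 * kap * (INR n * tau) + 4 * (tau * kap))
      by ring.
    pose proof (exp_ineq1_le (4 * kap * (INR n * tau))) as HA.
    pose proof (exp_ineq1_le (4 * (tau * kap))) as HB.
    rewrite exp_plus; set (A := exp (4 * kap * (INR n * tau))) in *; set (B := exp (4 * (tau * kap))) in *.
    assert (0 <= 4 * kap * (INR n * tau)) by (apply Rmult_le_pos; [lra|apply Rmult_le_pos; lra]).
    assert (HtG : 0 <= tau * G) by nra.
    assert (0 <= E O + 2 * INR n * tau * G) by (pose proof (HE O); nra).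
    assert ((1 + 4 * (tau * kap)) * E n <= B * (A * (E O + 2 * INR n * tau * G)))
      by (apply Rmult_le_compat; [nra|apply HE|exact HB|exact IH]).
    assert (1 <= A * B) by (rewrite <- (Rmult_1_l 1); apply Rmult_le_compat; nra).
    assert (2 * (tau * G) <= A * B * (2 * (tau * G))) by (rewrite <- (Rmult_1_l (2 * (tau * G))) at 1;
      apply Rmult_le_compat_r; lra).
    lra.
Qed.

(** * The exact solution *)

Lemma exists_interior_near a b x d : a < b -> a <= x <= b -> 0 < d ->
  exists y, a < y < b /\ Rabs (y - x) < d.
Proof.
  intros Hab Hx Hd; set (s := Rmin (d / 2) ((b - a) / 4)).
  assert (0 < s) by (apply Rmin_pos; lra).
  assert (s <= d / 2) by apply Rmin_l; assert (s <= (b - a) / 4) by apply Rmin_r.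
  destruct (Rlt_le_dec x ((a + b) / 2)); [exists (x + s)|exists (x - s)];
    (split; [lra|unfold Rabs; destruct Rcase_abs; lra]).
Qed.

Lemma Wbnd_nonneg m a b g c : a <= b -> Wbnd m a b g c -> 0 <= c.
Proof. intros Hab [Hs _]; pose proof (Hs 0%nat ltac:(lia) a ltac:(lra)); pose proof (vnorm_ge0 (g 0%nat a)); lra. Qed.

Section ExactSolution.

Variables (a b T K eps : R) (D : nat -> nat -> R -> R -> V2).
Hypothesis Heps : 0 < eps.
Hypothesis HK : 0 <= K.
Hypothesis Hreg : regA a b T D.
Hypothesis Hbnd : forall r t, (r <= 3)%nat -> 0 <= t <= T ->
  Wbnd (3 - r) a b (fun s => D r s t) (K / eps ^ r).

(* Subtraction on nat truncates: [3 - 3 - 1 = 0] still gives the bound on [D 3 0], and in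
   [D_tderiv] the bound [1 - 2 = 0] gives the time derivative of [D 2 0]. *)
Lemma D_sup r s t x : (r <= 3)%nat -> (s <= 3 - r - 1)%nat -> 0 <= t <= T -> a <= x <= b ->
  vnorm (D r s t x) <= K / eps ^ r.
Proof. intros Hr Hs Ht Hx; exact (proj1 (Hbnd r t Hr Ht) s Hs x Hx). Qed.

Lemma D_lipbnd r t : (r <= 2)%nat -> 0 <= t <= T -> lipbnd a b (D r (2 - r) t) (K / eps ^ r).
Proof.
  intros Hr Ht; pose proof (proj2 (Hbnd r t ltac:(lia) Ht) ltac:(lia)) as H.
  replace (3 - r - 1)%nat with (2 - r)%nat in H by lia; exact H.
Qed.

Lemma D_xderiv r s t : (r + s <= 1)%nat -> 0 <= t <= T -> xderiv a b (D r s t) (D r (S s) t).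
Proof. intros; apply (proj1 Hreg); auto. Qed.

Lemma D_periodic r s t : (r + s <= 2)%nat -> 0 <= t <= T -> D r s t a = D r s t b.
Proof. intros; apply (proj1 (proj2 Hreg)); auto. Qed.

Lemma D_tderiv r s x : (r <= 2)%nat -> (s <= 1 - r)%nat -> a <= x <= b ->
  xderiv 0 T (fun t => D r s t x) (fun t => D (S r) s t x).
Proof.
  intros Hr Hs Hx t Ht e He.
  destruct (proj1 (proj2 (proj2 Hreg)) (S r) r ltac:(lia) ltac:(lia) t Ht e He) as [d [Hd H]].
  exists d; split; [exact Hd|]; intros t' Ht' Htt.
  exact (proj1 (H t' Ht' Htt) s ltac:(lia) x Hx).
Qed.

Lemma K_div_pow_le k : (k <= 2)%nat -> K / eps ^ k <= K + K / eps + K / eps ^ 2.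
Proof.
  intros Hk; assert (0 <= K / eps) by (apply Rdiv_le_0_compat; lra).
  assert (0 <= K / eps ^ 2) by (apply Rdiv_le_0_compat; [lra|apply pow_lt, Heps]).
  destruct k as [|[|[|k]]]; try lia; simpl; unfold Rdiv; rewrite ?Rinv_1, ?Rmult_1_r; unfold Rdiv in *;
    simpl in *; rewrite ?Rmult_1_r in *; lra.
Qed.

Lemma D_joint_lipschitz r s t t' x x' : (r + s <= 1)%nat ->
  0 <= t <= T -> 0 <= t' <= T -> a <= x <= b -> a <= x' <= b ->
  vnorm (vsub (D r s t' x') (D r s t x)) <= (K + K / eps + K / eps ^ 2) * (Rabs (t' - t) + Rabs (x' - x)).
Proof.
  intros Hrs Ht Ht' Hx Hx'.
  replace (vsub (D r s t' x') (D r s t x))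
    with (vadd (vsub (D r s t' x') (D r s t x')) (vsub (D r s t x') (D r s t x))) by vring.
  eapply Rle_trans; [apply vnorm_add_le|]; rewrite Rmult_plus_distr_l.
  apply Rplus_le_compat.
  - apply (xderiv_diff_le 0 T (fun t => D r s t x') (fun t => D (S r) s t x')); auto.
    + apply D_tderiv; auto; lia.
    + intros u Hu; eapply Rle_trans; [apply D_sup; [lia|lia|apply (between_in 0 T t' t u Ht' Ht Hu)|exact Hx']|].
      apply K_div_pow_le; lia.
  - apply (xderiv_diff_le a b (D r s t) (D r (S s) t)); auto.
    + apply D_xderiv; auto.
    + intros u Hu; eapply Rle_trans; [apply D_sup; [lia|lia|exact Ht|apply (between_in a b x' x u Hx' Hx Hu)]|].
      apply K_div_pow_le; lia.
Qed.

Lemma D_dirac_eq_closed (V A : R -> R -> R) : a < b -> 0 < T ->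
  cont_rect T a b V -> cont_rect T a b A ->
  (forall t x, 0 < t <= T -> a < x < b ->
     dirac_eq eps (V t x) (A t x) (D 1 0 t x) (D 0 1 t x) (D 0 0 t x)) ->
  forall t x, 0 <= t <= T -> a <= x <= b ->
    dirac_eq eps (V t x) (A t x) (D 1 0 t x) (D 0 1 t x) (D 0 0 t x).
Proof.
  intros Hab HT HV HA HP t x Ht Hx.
  apply dirac_eq_iff_residual, (dirac_residual_eq0_of_approx eps _ _ _ _ _ K Heps); intros eta Heta.
  set (L := K + K / eps + K / eps ^ 2).
  assert (HL : 0 <= L) by (unfold L; pose proof (Rdiv_le_0_compat K eps HK Heps);
    pose proof (Rdiv_le_0_compat K (eps ^ 2) HK (pow_lt eps 2 Heps)); lra).
  destruct (HV t x Ht Hx eta Heta) as [dV [HdV HV']].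
  destruct (HA t x Ht Hx eta Heta) as [dA [HdA HA']].
  set (q := eta / (2 * L + 1)).
  assert (Hq : 0 < q) by (apply Rdiv_lt_0_compat; lra).
  assert (Hd : 0 < Rmin (Rmin dV dA) q) by (repeat apply Rmin_pos; lra).
  destruct (exists_interior_near 0 T t _ HT Ht Hd) as [t' [Ht' Htt]].
  destruct (exists_interior_near a b x _ Hab Hx Hd) as [x' [Hx' Hxx]].
  apply Rmin_Rgt in Htt as [Htt Htq]; apply Rmin_Rgt in Htt as [HtV HtA].
  apply Rmin_Rgt in Hxx as [Hxx Hxq]; apply Rmin_Rgt in Hxx as [HxV HxA].
  assert (Hnear : forall r s, (r + s <= 1)%nat -> vnorm (vsub (D r s t' x') (D r s t x)) <= eta).
  { intros r s Hrs; eapply Rle_trans; [apply D_joint_lipschitz; auto; lra|]; fold L.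
    replace eta with ((2 * L + 1) * q) by (unfold q; field; lra).
    assert (L * (Rabs (t' - t) + Rabs (x' - x)) <= L * (2 * q)) by (apply Rmult_le_compat_l; lra).
    lra. }
  exists (V t' x'), (A t' x'), (D 1 0 t' x'), (D 0 1 t' x'), (D 0 0 t' x'); repeat split.
  - apply dirac_eq_iff_residual, HP; lra.
  - eapply Rle_trans; [apply (D_sup 0 0); simpl; try lia; lra|]; simpl; unfold Rdiv; lra.
  - left; apply HV'; lra.
  - left; apply HA'; lra.
  - apply Hnear; lia.
  - apply Hnear; lia.
  - apply Hnear; lia.
Qed.

Lemma D_tdiff_error t tau x : 0 < tau -> 0 <= t - tau -> t + tau <= T -> a <= x <= b ->
  vnorm (vsub (vrscal (/ (2 * tau)) (vsub (D 0 0 (t + tau) x) (D 0 0 (t - tau) x))) (D 1 0 t x))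
    <= K / eps ^ 3 * tau ^ 2.
Proof.
  intros Htau H0 H1 Hx.
  apply (central_difference_error 0 T (fun s => D 0 0 s x) (fun s => D 1 0 s x) (fun s => D 2 0 s x));
    auto; try lra.
  - apply Rdiv_le_0_compat; [lra|apply pow_lt, Heps].
  - apply D_tderiv; auto; lia.
  - apply D_tderiv; auto; lia.
  - apply (lipbnd_of_deriv_le 0 T _ (fun s => D 3 0 s x)); [apply D_tderiv; auto; lia|].
    intros s Hs; apply D_sup; auto; lia.
Qed.

Lemma D_tavg_error t tau x : 0 <= tau -> 0 <= t - tau -> t + tau <= T -> a <= x <= b ->
  vnorm (vsub (vrscal (1 / 2) (vadd (D 0 0 (t + tau) x) (D 0 0 (t - tau) x))) (D 0 0 t x))
    <= K / eps ^ 2 * tau ^ 2.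
Proof.
  intros Htau H0 H1 Hx.
  apply (average_error 0 T (fun s => D 0 0 s x) (fun s => D 1 0 s x)); auto; try lra.
  - apply Rdiv_le_0_compat; [lra|apply pow_lt, Heps].
  - apply D_tderiv; auto; lia.
  - apply (lipbnd_of_deriv_le 0 T _ (fun s => D 2 0 s x)); [apply D_tderiv; auto; lia|].
    intros s Hs; apply D_sup; auto; lia.
Qed.

Lemma D_tavg_error_lipbnd t tau : 0 <= tau -> 0 <= t - tau -> t + tau <= T ->
  lipbnd a b (fun x => vsub (vrscal (1 / 2) (vadd (D 0 0 (t + tau) x) (D 0 0 (t - tau) x))) (D 0 0 t x))
    (K / eps ^ 2 * tau ^ 2).
Proof.
  intros Htau H0 H1 y x Hy Hx.
  set (L := K / eps ^ 2 * Rabs (y - x)).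
  assert (HL : 0 <= L) by (apply Rmult_le_pos; [apply Rdiv_le_0_compat; [lra|apply pow_lt, Heps]|apply Rabs_pos]).
  replace (K / eps ^ 2 * tau ^ 2 * Rabs (y - x)) with (L * tau ^ 2) by (unfold L; ring).
  replace (vsub (vsub (vrscal (1 / 2) (vadd (D 0 0 (t + tau) y) (D 0 0 (t - tau) y))) (D 0 0 t y))
                (vsub (vrscal (1 / 2) (vadd (D 0 0 (t + tau) x) (D 0 0 (t - tau) x))) (D 0 0 t x)))
    with (vsub (vrscal (1 / 2) (vadd (vsub (D 0 0 (t + tau) y) (D 0 0 (t + tau) x))
                                     (vsub (D 0 0 (t - tau) y) (D 0 0 (t - tau) x))))
               (vsub (D 0 0 t y) (D 0 0 t x))) by vring.
  apply (average_error 0 T (fun s => vsub (D 0 0 s y) (D 0 0 s x)) (fun s => vsub (D 1 0 s y) (D 1 0 s x)));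
    auto; try lra.
  - apply xderiv_sub; apply D_tderiv; auto; lia.
  - apply (lipbnd_of_deriv_le 0 T _ (fun s => vsub (D 2 0 s y) (D 2 0 s x))).
    + apply xderiv_sub; apply D_tderiv; auto; lia.
    + intros s Hs; apply (D_lipbnd 2 s); auto.
Qed.

Lemma D_sifd2_defect_le M tau t j Vn An : a < b -> (1 <= M)%nat -> (j < M)%nat ->
  0 < tau -> 0 <= t - tau -> t + tau <= T ->
  dirac_eq eps Vn An (D 1 0 t (gridx a b M j)) (D 0 1 t (gridx a b M j)) (D 0 0 t (gridx a b M j)) ->
  vnorm (sifd2_defect eps tau (meshh a b M) M Vn An
           (fun k => D 0 0 (t - tau) (gridx a b M k)) (fun k => D 0 0 t (gridx a b M k))
           (fun k => D 0 0 (t + tau) (gridx a b M k)) j)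
    <= 3 * K * (meshh a b M ^ 2 / eps + tau ^ 2 / eps ^ 3).
Proof.
  intros Hab HM Hj Htau H0 H1 Hpde.
  pose proof (gridx_range a b M Hab HM j Hj); pose proof (meshh_pos a b M Hab HM).
  assert (Ht : 0 <= t <= T) by lra.
  eapply Rle_trans.
  { apply (sifd2_defect_le _ _ _ _ _ _ _ _ _ _ _ _
             (K / eps ^ 3 * tau ^ 2) (K * meshh a b M ^ 2) (K / eps ^ 2 * tau ^ 2) (K / eps ^ 2 * tau ^ 2)
             Heps Hpde).
    - apply D_tdiff_error; auto; lra.
    - apply (grid_central_difference_error a b M Hab HM (D 0 0 t) (D 0 1 t) (D 0 2 t)); auto;
        try (apply D_xderiv; auto); try (apply D_periodic; auto).
      pose proof (D_lipbnd 0 t ltac:(lia) Ht) as Hl; simpl in Hl; rewrite Rdiv_1_r in Hl; exact Hl.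
    - apply (grid_lipbnd_difference_le a b M Hab HM
        (fun x => vsub (vrscal (1 / 2) (vadd (D 0 0 (t + tau) x) (D 0 0 (t - tau) x))) (D 0 0 t x)));
        [exact Hj|apply D_tavg_error_lipbnd; lra|].
      rewrite !(D_periodic 0 0) by (auto; lra); reflexivity.
    - apply D_tavg_error; lra. }
  set (h := meshh a b M).
  assert (E : K / eps ^ 3 * tau ^ 2 + / eps * (K * h ^ 2 + K / eps ^ 2 * tau ^ 2 + K / eps ^ 2 * tau ^ 2)
              = K * (h ^ 2 / eps) + 3 * K * (tau ^ 2 / eps ^ 3)) by (field; lra).
  assert (0 <= K * (h ^ 2 / eps)) by (apply Rmult_le_pos; [|apply Rdiv_le_0_compat; [apply pow2_ge_0|]]; lra).
  lra.
Qed.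

Lemma D_first_step_error tau x Vv Av : 0 < tau <= T -> a <= x <= b ->
  dirac_eq eps Vv Av (D 1 0 0 x) (D 0 1 0 x) (D 0 0 0 x) ->
  vnorm (vsub (D 0 0 tau x) (first_step eps tau Vv Av (D 0 0 0 x) (D 0 1 0 x)))
    <= 5 * K * (tau ^ 2 / eps ^ 2).
Proof.
  intros Htau Hx Hpde; apply dirac_eq_iff_residual in Hpde.
  rewrite (first_step_split _ _ _ _ _ _ (D 1 0 0 x)), Hpde.
  replace (vscal (0, - tau) vzero) with vzero by vring; rewrite vadd_vzero.
  eapply Rle_trans; [apply vnorm_add_le|].
  assert (H1 : vnorm (vsub (vsub (D 0 0 tau x) (D 0 0 0 x)) (vrscal tau (D 1 0 0 x))) <= K / eps ^ 2 * tau ^ 2).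
  { replace tau with (tau - 0) at 2 by ring; replace (tau ^ 2) with ((tau - 0) ^ 2) by ring.
    apply (taylor1_error 0 T (fun s => D 0 0 s x) (fun s => D 1 0 s x)); try lra.
    - apply Rdiv_le_0_compat; [lra|apply pow_lt, Heps].
    - apply D_tderiv; auto; lia.
    - apply (lipbnd_of_deriv_le 0 T _ (fun s => D 2 0 s x)); [apply D_tderiv; auto; lia|].
      intros s Hs; apply D_sup; auto; lia. }
  assert (H2 : vnorm (vadd (sigma1 (D 0 1 0 x)) (vscal Ci (sigma3 (D 0 0 0 x)))) <= 2 * K).
  { eapply Rle_trans; [apply vnorm_add_le|]; rewrite vnorm_sigma1, vnorm_scal, Cmod_Ci, vnorm_sigma3.
    pose proof (D_sup 0 1 0 x ltac:(lia) ltac:(lia) ltac:(lra) Hx);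
    pose proof (D_sup 0 0 0 x ltac:(lia) ltac:(lia) ltac:(lra) Hx); simpl in *; rewrite Rdiv_1_r in *; lra. }
  pose proof (Rabs_sin_sub_le (tau / eps) ltac:(apply Rdiv_le_0_compat; lra)) as H3.
  rewrite vnorm_rscal.
  assert (Rabs (sin (tau / eps) - tau / eps) * vnorm (vadd (sigma1 (D 0 1 0 x)) (vscal Ci (sigma3 (D 0 0 0 x))))
          <= 2 * (tau / eps) ^ 2 * (2 * K)) by (apply Rmult_le_compat; auto using Rabs_pos, vnorm_ge0).
  replace (5 * K * (tau ^ 2 / eps ^ 2)) with (K / eps ^ 2 * tau ^ 2 + 2 * (tau / eps) ^ 2 * (2 * K))
    by (field; lra).
  lra.
Qed.

End ExactSolution.

(** * Convergence *)

Section Convergence.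

Variables (a b T K eps m tau : R) (M : nat) (D : nat -> nat -> R -> R -> V2) (V A : R -> R -> R)
  (U : nat -> nat -> V2).
Hypothesis Hab : a < b.
Hypothesis Heps : 0 < eps <= 1.
Hypothesis HK : 0 <= K.
Hypothesis Hreg : regA a b T D.
Hypothesis Hbnd : forall r t, (r <= 3)%nat -> 0 <= t <= T ->
  Wbnd (3 - r) a b (fun s => D r s t) (K / eps ^ r).
Hypothesis Hpde : forall t x, 0 <= t <= T -> a <= x <= b ->
  dirac_eq eps (V t x) (A t x) (D 1 0 t x) (D 0 1 t x) (D 0 0 t x).
Hypothesis Hm : forall t x, 0 <= t <= T -> a <= x <= b -> Rabs (V t x) + Rabs (A t x) <= m.
Hypothesis HM : (1 <= M)%nat.
Hypothesis Htau : 0 < tau.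
Hypothesis Htau_small : tau * (1 + 4 * m ^ 2) <= 1 / 2.
Hypothesis HU0 : forall j, (j < M)%nat -> U 0%nat j = D 0 0 0 (gridx a b M j).
Hypothesis HU1 : forall j, (j < M)%nat -> U 1%nat j =
  first_step eps tau (V 0 (gridx a b M j)) (A 0 (gridx a b M j))
    (D 0 0 0 (gridx a b M j)) (D 0 1 0 (gridx a b M j)).
Hypothesis HU : forall n j, (1 <= n)%nat -> INR (S n) * tau <= T -> (j < M)%nat ->
  sifd2_eq eps tau (meshh a b M) M (V (INR n * tau) (gridx a b M j)) (A (INR n * tau) (gridx a b M j))
    (U (n - 1)%nat) (U n) (U (S n)) j.

Let h := meshh a b M.
Let X := h ^ 2 / eps + tau ^ 2 / eps ^ 3.
Let sol (t : R) (k : nat) : V2 := D 0 0 t (gridx a b M k).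
Let err (n j : nat) : V2 := vsub (sol (INR n * tau) j) (U n j).
Let energy (k : nat) : R := sqsum M (err (S k)) + sqsum M (err k).

Lemma KX_ge0 : 0 <= K * X.
Proof.
  assert (0 <= h ^ 2 / eps) by (apply Rdiv_le_0_compat; [apply pow2_ge_0|lra]).
  assert (0 <= tau ^ 2 / eps ^ 3) by (apply Rdiv_le_0_compat; [apply pow2_ge_0|apply pow_lt; lra]).
  apply Rmult_le_pos; unfold X; lra.
Qed.

Lemma err_defect n j : (1 <= n)%nat -> INR (S n) * tau <= T -> (j < M)%nat ->
  sifd2_defect eps tau h M (V (INR n * tau) (gridx a b M j)) (A (INR n * tau) (gridx a b M j))
    (err (n - 1)) (err n) (err (S n)) j
  = sifd2_defect eps tau h M (V (INR n * tau) (gridx a b M j)) (A (INR n * tau) (gridx a b M j))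
    (sol (INR (n - 1) * tau)) (sol (INR n * tau)) (sol (INR (S n) * tau)) j.
Proof.
  intros Hn HnT Hj; unfold err; etransitivity; [apply sifd2_defect_sub|].
  etransitivity; [apply f_equal, (proj1 (sifd2_eq_iff_defect _ _ _ _ _ _ _ _ _ _) (HU n j Hn HnT Hj))|].
  apply vsub_vzero.
Qed.

Lemma err_defect_le n j : (1 <= n)%nat -> INR (S n) * tau <= T -> (j < M)%nat ->
  vnorm (sifd2_defect eps tau h M (V (INR n * tau) (gridx a b M j)) (A (INR n * tau) (gridx a b M j))
           (err (n - 1)) (err n) (err (S n)) j) <= 5 * K * X.
Proof.
  intros Hn HnT Hj; rewrite err_defect by assumption.
  set (t := INR n * tau).
  replace (INR (n - 1) * tau) with (t - tau) by (unfold t; rewrite minus_INR by lia; simpl; ring).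
  replace (INR (S n) * tau) with (t + tau) in * by (unfold t; rewrite S_INR; ring).
  assert (0 <= t - tau) by (unfold t; pose proof (le_INR 1 n ltac:(lia)); simpl in *; nra).
  eapply Rle_trans.
  { apply (D_sifd2_defect_le a b T K eps D (proj1 Heps) HK Hreg Hbnd); auto; try lra.
    apply Hpde; [lra|apply (gridx_in a b M Hab HM j Hj)]. }
  pose proof KX_ge0; fold h X; lra.
Qed.

Lemma err_energy_step k : (1 <= k)%nat -> INR (S k) * tau <= T ->
  energy k - energy (k - 1) <= tau * (1 + 4 * m ^ 2) * (energy k + energy (k - 1))
                               + tau * (4 * (INR M * (5 * K * X) ^ 2)).
Proof.
  intros Hk HkT.
  assert (Ht : 0 <= INR k * tau <= T)
    by (split; [apply Rmult_le_pos; [apply pos_INR|lra]|rewrite S_INR in HkT; lra]).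
  set (xi j := sifd2_defect eps tau h M (V (INR k * tau) (gridx a b M j)) (A (INR k * tau) (gridx a b M j))
                 (err (k - 1)) (err k) (err (S k)) j).
  pose proof (sifd2_energy_step eps tau h M m (fun j => V (INR k * tau) (gridx a b M j))
    (fun j => A (INR k * tau) (gridx a b M j)) (err (k - 1)) (err k) (err (S k)) xi HM Htau (proj1 Heps)
    (fun j Hj => Hm _ _ Ht (gridx_in a b M Hab HM j Hj)) (fun j Hj => eq_refl)) as Hs.
  assert (Hxi : sqsum M xi <= INR M * (5 * K * X) ^ 2).
  { apply sqsum_le; [pose proof KX_ge0; lra|intros j Hj; apply (err_defect_le k j); assumption]. }
  unfold energy; replace (S (k - 1)) with k by lia.
  set (s1 := sqsum M (err (S k))) in *; set (s0 := sqsum M (err k)) in *;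
    set (sm := sqsum M (err (k - 1))) in *.
  assert (0 <= s1 /\ 0 <= s0 /\ 0 <= sm) as [? [? ?]] by (repeat split; apply sqsum_ge0).
  assert (4 * m ^ 2 * s0 + s1 + sm <= (1 + 4 * m ^ 2) * (s1 + s0 + (s0 + sm)))
    by (pose proof (pow2_ge_0 m); nra).
  assert (tau * (4 * m ^ 2 * s0 + s1 + sm) <= tau * ((1 + 4 * m ^ 2) * (s1 + s0 + (s0 + sm))))
    by (apply Rmult_le_compat_l; lra).
  assert (4 * tau * sqsum M xi <= tau * (4 * (INR M * (5 * K * X) ^ 2))) by nra.
  lra.
Qed.

Lemma err_initial j : (j < M)%nat -> err 0 j = vzero.
Proof.
  intros Hj; unfold err, sol; replace (INR 0 * tau) with 0 by (simpl; ring); rewrite HU0 by exact Hj.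
  vring.
Qed.

Lemma err_first_step_le j : (j < M)%nat -> tau <= T -> vnorm (err 1 j) <= 5 * K * X.
Proof.
  intros Hj HtT; unfold err, sol; replace (INR 1 * tau) with tau by (simpl; ring); rewrite HU1 by exact Hj.
  eapply Rle_trans.
  { apply (D_first_step_error a b T K eps D (proj1 Heps) HK Hreg Hbnd); [lra|apply (gridx_in a b M Hab HM j Hj)|].
    apply Hpde; [lra|apply (gridx_in a b M Hab HM j Hj)]. }
  apply Rmult_le_compat_l; [lra|].
  assert (tau ^ 2 / eps ^ 2 <= tau ^ 2 / eps ^ 3).
  { apply Rmult_le_compat_l; [apply pow2_ge_0|apply Rinv_le_contravar; [apply pow_lt; lra|]].
    simpl; pose proof (proj1 Heps); nra. }
  assert (0 <= h ^ 2 / eps) by (apply Rdiv_le_0_compat; [apply pow2_ge_0|lra]).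
  unfold X; lra.
Qed.

Lemma sqsum_err_initial : sqsum M (err 0) = 0.
Proof.
  unfold sqsum; rewrite (gsum_ext _ (fun _ => 0)), gsum_const; [ring|].
  intros j Hj; rewrite err_initial, vnorm_vzero by exact Hj; ring.
Qed.

Lemma energy_initial_le : tau <= T -> energy 0 <= INR M * (5 * K * X) ^ 2.
Proof.
  intros HtT; unfold energy; rewrite sqsum_err_initial, Rplus_0_r.
  apply sqsum_le; [pose proof KX_ge0; lra|intros j Hj; apply err_first_step_le; assumption].
Qed.

Lemma energy_le n : INR (S n) * tau <= T ->
  energy n <= exp (4 * (1 + 4 * m ^ 2) * (INR n * tau))
              * (energy 0 + 2 * INR n * tau * (4 * (INR M * (5 * K * X) ^ 2))).
Proof.
  intros HnT; apply discrete_gronwall with (N := n); auto.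
  - pose proof (pow2_ge_0 m); lra.
  - pose proof (pos_INR M); pose proof (pow2_ge_0 (5 * K * X)); nra.
  - intros k; unfold energy; pose proof (sqsum_ge0 M (err (S k))); pose proof (sqsum_ge0 M (err k)); lra.
  - intros k Hk; apply err_energy_step; [lia|].
    apply Rle_trans with (INR (S n) * tau); [apply Rmult_le_compat_r; [lra|apply le_INR; lia]|exact HnT].
Qed.

Lemma err_sqsum_le n : INR n * tau <= T ->
  sqsum M (err n) <= exp (4 * (1 + 4 * m ^ 2) * T) * INR M * (1 + 8 * T) * (5 * K * X) ^ 2.
Proof.
  intros HnT; set (kap := 1 + 4 * m ^ 2); set (G := INR M * (5 * K * X) ^ 2).
  assert (HG : 0 <= G) by (pose proof (pos_INR M); pose proof (pow2_ge_0 (5 * K * X)); unfold G; nra).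
  assert (HT : 0 <= T) by (pose proof (Rmult_le_pos _ _ (pos_INR n) (Rlt_le _ _ Htau)); lra).
  replace (exp (4 * kap * T) * INR M * (1 + 8 * T) * (5 * K * X) ^ 2)
    with (exp (4 * kap * T) * (G + 2 * T * (4 * G))) by (unfold G; ring).
  destruct n as [|n].
  { rewrite sqsum_err_initial; pose proof (exp_pos (4 * kap * T)); pose proof (Rmult_le_pos _ _ HT HG).
    apply Rmult_le_pos; lra. }
  assert (HnT' : 0 <= INR n * tau <= T)
    by (rewrite S_INR in HnT; pose proof (Rmult_le_pos _ _ (pos_INR n) (Rlt_le _ _ Htau)); lra).
  assert (Hexp : exp (4 * kap * (INR n * tau)) <= exp (4 * kap * T)).
  { destruct (Req_dec (INR n * tau) T) as [->|]; [lra|left; apply exp_increasing].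
    apply Rmult_lt_compat_l; [unfold kap; pose proof (pow2_ge_0 m)|]; lra. }
  assert (HE0 : energy 0 <= G)
    by (apply energy_initial_le; rewrite S_INR in HnT; pose proof (pos_INR n); nra).
  assert (HsE : sqsum M (err (S n)) <= energy n)
    by (unfold energy; pose proof (sqsum_ge0 M (err n)); lra).
  eapply Rle_trans; [exact HsE|]; eapply Rle_trans; [apply energy_le, HnT|]; fold kap G.
  apply Rmult_le_compat; [left; apply exp_pos| |exact Hexp|].
  - pose proof (sqsum_ge0 M (err 1)); unfold energy; rewrite sqsum_err_initial.
    assert (0 <= INR n * tau * G) by (apply Rmult_le_pos; lra); lra.
  - assert (INR n * tau * G <= T * G) by (apply Rmult_le_compat_r; lra); lra.
Qed.

Lemma sifd2_error_estimate n : INR n * tau <= T ->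
  l2norm (meshh a b M) M (fun j => vsub (D 0 0 (INR n * tau) (gridx a b M j)) (U n j))
    <= 5 * K * sqrt (exp (4 * (1 + 4 * m ^ 2) * T) * (b - a) * (1 + 8 * T))
         * (meshh a b M ^ 2 / eps + tau ^ 2 / eps ^ 3).
Proof.
  intros HnT; change (sqrt (h * sqsum M (err n)) <= 5 * K
    * sqrt (exp (4 * (1 + 4 * m ^ 2) * T) * (b - a) * (1 + 8 * T)) * X).
  set (Q := exp (4 * (1 + 4 * m ^ 2) * T) * (b - a) * (1 + 8 * T)).
  assert (HT : 0 <= T) by (pose proof (Rmult_le_pos _ _ (pos_INR n) (Rlt_le _ _ Htau)); lra).
  assert (HQ : 0 <= Q) by (pose proof (exp_pos (4 * (1 + 4 * m ^ 2) * T)); unfold Q;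
                           repeat apply Rmult_le_pos; lra).
  assert (HKX : 0 <= 5 * K * X) by (pose proof KX_ge0; lra).
  replace (5 * K * sqrt Q * X) with (sqrt (Q * (5 * K * X) ^ 2))
    by (rewrite sqrt_mult_alt, sqrt_pow2 by (auto using pow2_ge_0); ring).
  apply sqrt_le_1_alt.
  replace (Q * (5 * K * X) ^ 2)
    with (h * (exp (4 * (1 + 4 * m ^ 2) * T) * INR M * (1 + 8 * T) * (5 * K * X) ^ 2))
    by (unfold Q, h; rewrite <- (INR_mul_meshh a b M HM); ring).
  apply Rmult_le_compat_l; [left; apply meshh_pos; assumption|apply err_sqsum_le, HnT].
Qed.

End Convergence.

Theorem theorem3 (a b T : R) (V A1 : R -> R -> R) (Vmax A1max : R)
  (Phi : R -> R -> R -> V2) (D : R -> nat -> nat -> R -> R -> V2) :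
  a < b -> 0 < T ->
  (* (B) *)
  cont_rect T a b V -> cont_rect T a b A1 ->
  is_absmax T a b V Vmax -> is_absmax T a b A1 A1max ->
  (* D eps r s = d_t^r d_x^s Phi_eps *)
  (forall eps, 0 < eps <= 1 -> forall t x, 0 <= t <= T -> a <= x <= b ->
     D eps 0%nat 0%nat t x = Phi eps t x) ->
  (* (A), qualitative part (includes periodic boundary conditions) *)
  (forall eps, 0 < eps <= 1 -> regA a b T (D eps)) ->
  (* (A), bounds ||d_t^r d_x^s Phi|| <~ eps^{-r}, uniformly in eps *)
  (exists K, forall eps, 0 < eps <= 1 -> forall r t, (r <= 3)%nat -> 0 <= t <= T ->
     Wbnd (3 - r) a b (fun s => D eps r s t) (K / eps ^ r)) ->
  (* Phi_eps solves the Dirac equation *)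
  (forall eps, 0 < eps <= 1 -> forall t x, 0 < t <= T -> a < x < b ->
     dirac_eq eps (V t x) (A1 t x) (D eps 1%nat 0%nat t x) (D eps 0%nat 1%nat t x)
       (D eps 0%nat 0%nat t x)) ->
  exists h0 tau0 C, 0 < h0 /\ 0 < tau0 /\
   forall (eps : R) (M : nat) (tau : R) (U : nat -> nat -> V2),
   0 < eps <= 1 -> (1 <= M)%nat -> meshh a b M <= h0 ->
   0 < tau <= tau0 -> tau * (Vmax + A1max) <= 1 ->
   (forall j, (j < M)%nat -> U 0%nat j = Phi eps 0 (gridx a b M j)) ->
   (forall j, (j < M)%nat -> U 1%nat j =
      first_step eps tau (V 0 (gridx a b M j)) (A1 0 (gridx a b M j))
        (Phi eps 0 (gridx a b M j)) (D eps 0%nat 1%nat 0 (gridx a b M j))) ->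
   (forall n j, (1 <= n)%nat -> INR (S n) * tau <= T -> (j < M)%nat ->
      sifd2_eq eps tau (meshh a b M) M
        (V (INR n * tau) (gridx a b M j)) (A1 (INR n * tau) (gridx a b M j))
        (U (n - 1)%nat) (U n) (U (S n)) j) ->
   forall n : nat, INR n * tau <= T ->
     l2norm (meshh a b M) M
       (fun j => vsub (Phi eps (INR n * tau) (gridx a b M j)) (U n j))
     <= C * (meshh a b M ^ 2 / eps + tau ^ 2 / eps ^ 3).
Proof.
  intros Hab HT HV HA HVm HAm HD Hreg [K HKb] Hpde.
  assert (HK : 0 <= K).
  { pose proof (Wbnd_nonneg _ _ _ _ _ (Rlt_le _ _ Hab) (HKb 1 ltac:(lra) 0%nat 0 ltac:(lia) ltac:(lra))).
    simpl in *; lra. }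
  set (m := Vmax + A1max); set (kap := 1 + 4 * m ^ 2).
  assert (Hkap : 0 < kap) by (unfold kap; pose proof (pow2_ge_0 m); lra).
  exists 1, (1 / (2 * kap)), (5 * K * sqrt (exp (4 * kap * T) * (b - a) * (1 + 8 * T))).
  split; [lra|split; [apply Rdiv_lt_0_compat; lra|]].
  (* tau <= 1 / (2 * kap) is stronger than the stability condition, and no bound on h is needed *)
  intros eps M tau U Heps HM _ Htau _ HU0 HU1 HU n HnT.
  assert (HPhi : forall t j, 0 <= t <= T -> (j < M)%nat -> Phi eps t (gridx a b M j) = D eps 0%nat 0%nat t (gridx a b M j))
    by (intros t j Ht Hj; symmetry; apply HD; [exact Heps|exact Ht|apply (gridx_in a b M Hab HM j Hj)]).
  rewrite (l2norm_ext _ _ _ (fun j => vsub (D eps 0%nat 0%nat (INR n * tau) (gridx a b M j)) (U n j)))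
    by (intros j Hj; rewrite HPhi; [reflexivity| |exact Hj]; split; [apply Rmult_le_pos; [apply pos_INR|lra]|exact HnT]).
  apply (sifd2_error_estimate a b T K eps m tau M (D eps) V A1 U Hab Heps HK (Hreg eps Heps) (HKb eps Heps));
    auto; try apply Htau.
  - apply (D_dirac_eq_closed a b T K eps (D eps) (proj1 Heps) HK (Hreg eps Heps) (HKb eps Heps)); auto.
  - intros t x Ht Hx; pose proof (proj1 HVm t x Ht Hx); pose proof (proj1 HAm t x Ht Hx); unfold m; lra.
  - fold kap; destruct Htau as [_ Ht]; apply (Rmult_le_compat_r kap) in Ht; [|lra].
    replace (1 / (2 * kap) * kap) with (1 / 2) in Ht by (field; lra); exact Ht.
  - intros j Hj; rewrite HU0, HPhi by (auto; lra); reflexivity.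
  - intros j Hj; rewrite HU1, HPhi by (auto; lra); reflexivity.
Qed.
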